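(* Let $N\ge1$ and for $1\le i\le N$ and integers $x\ge1$ let $\Theta_i(x)=\binom{x+i-2}{x-1}$. Then for all $1\le i,j\le N$, \[\sum_{x=1}^\infty\sum_{y=1}^\infty\Theta_i(x)\,Q_{1,1}(x,y)\,\Theta_j(y)=Q_{i+1,j+1}(1,1).\]
   Context: Fix $\alpha\ge0$, $t\ge0$. For integers $k,\ell,x,y$, \[Q_{k,\ell}(x,y)=\alpha^2\oint_\beta\frac{{\rm d} v}{2\pi\mathrm{i}}\oint_\beta\frac{{\rm d} w}{2\pi\mathrm{i}}\frac{v-w}{1-v-w}\frac{w^{k-x}\mathrm{e}^{t(w-1)}}{(w-\alpha)(w-1)^k}\frac{v^{\ell-y}\mathrm{e}^{t(v-1)}}{(v-\alpha)(v-1)^\ell},\] where $\beta$ is a positively oriented closed contour surrounding $0,1,\alpha,1-\alpha$ and omitting other singularities (the apparent singularity at $v+w=1$ contributes nothing). *)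

From Stdlib Require Import Reals ZArith.
From Coquelicot Require Import Coquelicot.
Open Scope R_scope.

Definition Cexpo (z : C) : C :=
  (exp (Re z) * cos (Im z), exp (Re z) * sin (Im z)).

Definition Czpow (z : C) (n : Z) : C :=
  match n with
  | Z0 => RtoC 1
  | Zpos p => Cpow z (Pos.to_nat p)
  | Zneg p => Cinv (Cpow z (Pos.to_nat p))
  end.

Definition Gfac (alpha t : R) (k x : Z) (w : C) : C :=
  Cdiv (Cmult (Czpow w (k - x)) (Cexpo (Cmult (RtoC t) (Cminus w (RtoC 1)))))
       (Cmult (Cminus w (RtoC alpha)) (Czpow (Cminus w (RtoC 1)) k)).

Definition Qintegrand (alpha t : R) (k l x y : Z) (v w : C) : C :=
  Cmult (Cmult (Cdiv (Cminus v w) (Cminus (Cminus (RtoC 1) v) w))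
               (Gfac alpha t k x w))
        (Gfac alpha t l y v).

(* The points 0, 1, alpha, 1 - alpha all lie at distance <= rho alpha from 1/2. *)
Definition rho (alpha : R) : R := Rmax (1/2) (Rabs (alpha - 1/2)).

Definition circ (r th : R) : C := (1/2 + r * cos th, r * sin th).
(* r e^{i th}: the factor  (dz/d th) / i  for that parametrisation *)
Definition circ_jac (r th : R) : C := (r * cos th, r * sin th).

(* Q_{k,l}(x,y) with the v-contour the circle |v - 1/2| = R1 and the
   w-contour the circle |w - 1/2| = R2 (positively oriented):
   oint dz/(2 pi i) f(z) = 1/(2 pi) int_0^{2pi} f(circ r th) r e^{i th} dth. *)
Definition Q (R1 R2 alpha t : R) (k l x y : Z) : C :=
  Cmult (RtoC (alpha ^ 2 / (2 * PI) ^ 2))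
   (RInt (V := C_R_CompleteNormedModule) (fun th =>
      RInt (V := C_R_CompleteNormedModule) (fun ph =>
        Cmult (Cmult (Qintegrand alpha t k l x y (circ R1 th) (circ R2 ph))
                     (circ_jac R1 th))
              (circ_jac R2 ph)) 0 (2 * PI)) 0 (2 * PI)).

Definition Theta (i x : nat) : R := Binomial.C (x + i - 2) (x - 1).

From Stdlib Require Import Reals ZArith Lra Lia Psatz.
From Coquelicot Require Import Coquelicot.
Open Scope R_scope.

(* Both contours are taken to be circles [|z - 1/2| = r].  In the centred variables
   [u = v - 1/2], [s = w - 1/2] the kernel [(v - w) / (1 - v - w)] is [(s - u) / (u + s)],
   which on two circles of different radii expands in a uniformly convergent geometric
   series in [s / u] (or in [u / s]).  Integrating term by term turns [Q] into a limit of
   sums of products of single circle integrals of functions holomorphic outside the disc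
   of radius [rho alpha]; each of those is independent of its radius, because its radial
   derivative is the angular derivative of a periodic function.  So [Q] depends only on
   which circle is the outer one, and both radii can be pushed beyond [3/2].  There
   [|1/v| < 1], and the negative binomial series [sum_m Theta_j(m+1) v^-m = (1 - 1/v)^-j]
   converges uniformly on the circle; under the integral it turns the factor of
   [Q_{k,1}(x, m+1)] into that of [Q_{k,j+1}(x, 1)], and likewise in [x]. *)



(** * Complex-valued functions of a real variable *)

Lemma norm_C_R (z : C) : norm (K := R_AbsRing) (V := C_R_NormedModule) z = Cmod z.
Proof.
  destruct z as [a b]. unfold norm; simpl. unfold prod_norm, Cmod; simpl.
  change (norm a) with (Rabs a). change (norm b) with (Rabs b).
  rewrite !Rmult_1_r, <- !Rabs_mult, !Rabs_pos_eq by nra. reflexivity.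
Qed.

Lemma ball_C_R (x y : C) (e : R) :
  Cmod (y - x) < e -> ball (M := C_R_CompleteNormedModule) x e y.
Proof.
  intros H. pose proof (Rmax_Cmod (y - x)%C) as Hmax.
  destruct x as [a b], y as [c d].
  split; unfold ball; simpl; unfold AbsRing_ball, abs, minus, plus, opp; simpl in *.
  - generalize (Rmax_l (Rabs (c + - a)) (Rabs (d + - b))); lra.
  - generalize (Rmax_r (Rabs (c + - a)) (Rabs (d + - b))); lra.
Qed.

Lemma Cmod_neq_0 (z : C) : 0 < Cmod z -> z <> RtoC 0.
Proof. intros H E. rewrite E, Cmod_0 in H. lra. Qed.

Lemma Cinv_neq_0 (z : C) : z <> RtoC 0 -> (/ z)%C <> RtoC 0.
Proof.
  intros H E. assert (H1 := Cinv_l z H). rewrite E, Cmult_0_l in H1.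
  injection H1. lra.
Qed.

Lemma Cplus_neq_0_Cmod (u s : C) : Cmod u <> Cmod s -> (u + s)%C <> RtoC 0.
Proof.
  intros H E. apply H. replace s with (- u)%C by (rewrite <- (Cplus_0_r (- u)), <- E; ring).
  now rewrite Cmod_opp.
Qed.

Lemma Cmod_1_minus_ge (z : C) (lam : R) : Cmod z <= lam -> 1 - lam <= Cmod (1 - z).
Proof.
  intros H. assert (T := Cmod_triangle (1 - z) z).
  replace (1 - z + z)%C with (RtoC 1) in T by ring. rewrite Cmod_1 in T. lra.
Qed.

Definition is_derive_C (f : R -> C) (x : R) (l : C) : Prop :=
  is_derive (K := R_AbsRing) (V := C_R_NormedModule) f x l.

Lemma is_derive_C_pair (f : R -> C) x (l : C) :
  is_derive (fun t => fst (f t)) x (fst l) ->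
  is_derive (fun t => snd (f t)) x (snd l) ->
  is_derive_C f x l.
Proof.
  intros H1 H2. unfold is_derive_C, is_derive in *.
  assert (H := filterdiff_comp'_2 (K := R_AbsRing) (T := R_NormedModule) (U := R_NormedModule)
     (V := R_NormedModule) (W := C_R_NormedModule) (fun t => fst (f t)) (fun t => snd (f t))
     (fun a b => (a, b)) x _ _ (fun a b => (a, b)) H1 H2).
  assert (Hid : filterdiff (K := R_AbsRing)
      (U := prod_NormedModule R_AbsRing R_NormedModule R_NormedModule) (V := C_R_NormedModule)
      (fun t => (fst t, snd t)) (locally (fst (f x), snd (f x))) (fun t => (fst t, snd t))).
  { apply filterdiff_ext_lin with (fun t => t).
    - apply filterdiff_ext with (fun t => t); [now intros [a b] | apply filterdiff_id].
    - now intros [a b]. }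
  apply filterdiff_ext with (fun y => (fst (f y), snd (f y))); [intros y; now destruct (f y)|].
  apply filterdiff_ext_lin with (1 := H Hid). intros y. now destruct l.
Qed.

Lemma is_derive_C_fst (f : R -> C) x (l : C) :
  is_derive_C f x l -> is_derive (fun t => fst (f t)) x (fst l).
Proof.
  intros H. unfold is_derive_C, is_derive in *.
  apply (filterdiff_comp' f (fun p : C_R_NormedModule => fst p) x _ (fun p => fst p)) in H.
  - now apply filterdiff_ext_lin with (1 := H).
  - apply filterdiff_linear, is_linear_fst.
Qed.

Lemma is_derive_C_snd (f : R -> C) x (l : C) :
  is_derive_C f x l -> is_derive (fun t => snd (f t)) x (snd l).
Proof.
  intros H. unfold is_derive_C, is_derive in *.
  apply (filterdiff_comp' f (fun p : C_R_NormedModule => snd p) x _ (fun p => snd p)) in H.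
  - now apply filterdiff_ext_lin with (1 := H).
  - apply filterdiff_linear, is_linear_snd.
Qed.

Lemma is_derive_C_eq (f : R -> C) x (l l' : C) :
  is_derive_C f x l -> l = l' -> is_derive_C f x l'.
Proof. now intros H <-. Qed.

Lemma is_derive_C_const (c : C) x : is_derive_C (fun _ => c) x 0.
Proof. apply is_derive_C_pair; apply (is_derive_const (K := R_AbsRing) (V := R_NormedModule)). Qed.

Lemma is_derive_R_eq (f : R -> R) x l l' : is_derive f x l -> l = l' -> is_derive f x l'.
Proof. now intros H <-. Qed.

Lemma is_derive_Rplus (f g : R -> R) x df dg :
  is_derive f x df -> is_derive g x dg -> is_derive (fun t => f t + g t) x (df + dg).
Proof. intros Hf Hg. apply (is_derive_plus f g x df dg Hf Hg). Qed.

Lemma is_derive_Rminus (f g : R -> R) x df dg :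
  is_derive f x df -> is_derive g x dg -> is_derive (fun t => f t - g t) x (df - dg).
Proof. intros Hf Hg. apply (is_derive_minus f g x df dg Hf Hg). Qed.

Lemma is_derive_Rmult (f g : R -> R) x df dg :
  is_derive f x df -> is_derive g x dg ->
  is_derive (fun t => f t * g t) x (df * g x + f x * dg).
Proof. intros Hf Hg. apply (is_derive_mult f g x df dg Hf Hg), Rmult_comm. Qed.

Lemma is_derive_C_plus (g h : R -> C) x (l m : C) :
  is_derive_C g x l -> is_derive_C h x m -> is_derive_C (fun t => (g t + h t)%C) x (l + m).
Proof.
  intros Hg Hh. apply is_derive_C_pair; simpl; apply is_derive_Rplus;
    auto using is_derive_C_fst, is_derive_C_snd.
Qed.

Lemma is_derive_C_mult (g h : R -> C) x (l m : C) :
  is_derive_C g x l -> is_derive_C h x m ->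
  is_derive_C (fun t => (g t * h t)%C) x (l * h x + g x * m).
Proof.
  intros Hg Hh.
  pose proof (is_derive_C_fst _ _ _ Hg). pose proof (is_derive_C_snd _ _ _ Hg).
  pose proof (is_derive_C_fst _ _ _ Hh). pose proof (is_derive_C_snd _ _ _ Hh).
  apply is_derive_C_pair; simpl.
  - eapply is_derive_R_eq.
    + apply is_derive_Rminus; apply is_derive_Rmult; eassumption.
    + destruct l, m, (g x), (h x); simpl; ring.
  - eapply is_derive_R_eq.
    + apply is_derive_Rplus; apply is_derive_Rmult; eassumption.
    + destruct l, m, (g x), (h x); simpl; ring.
Qed.

Lemma is_derive_C_exp (g : R -> C) x (l : C) :
  is_derive_C g x l -> is_derive_C (fun t => Cexpo (g t)) x (Cexpo (g x) * l).
Proof.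
  intros Hg.
  pose proof (is_derive_C_fst _ _ _ Hg) as H1. pose proof (is_derive_C_snd _ _ _ Hg) as H2.
  assert (E := is_derive_comp exp _ x _ _ (is_derive_exp _) H1).
  assert (Cs := is_derive_comp cos _ x _ _ (is_derive_cos _) H2).
  assert (Sn := is_derive_comp sin _ x _ _ (is_derive_sin _) H2).
  apply is_derive_C_pair; unfold Cexpo, Re, Im; simpl.
  - eapply is_derive_R_eq; [apply (is_derive_Rmult _ _ _ _ _ E Cs)|].
    unfold scal; simpl; unfold mult; simpl. destruct l; ring.
  - eapply is_derive_R_eq; [apply (is_derive_Rmult _ _ _ _ _ E Sn)|].
    unfold scal; simpl; unfold mult; simpl. destruct l; ring.
Qed.

Lemma is_derive_C_inv (g : R -> C) x (l : C) :
  is_derive_C g x l -> g x <> RtoC 0 ->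
  is_derive_C (fun t => (/ g t)%C) x (- (l / (g x * g x))).
Proof.
  intros Hg Hz.
  pose proof (is_derive_C_fst _ _ _ Hg) as H1. pose proof (is_derive_C_snd _ _ _ Hg) as H2.
  assert (Hn : fst (g x) ^ 2 + snd (g x) ^ 2 <> 0).
  { intro E. apply Hz. destruct (g x) as [a b]; simpl in E.
    apply injective_projections; simpl; nra. }
  assert (D : is_derive (fun t => fst (g t) ^ 2 + snd (g t) ^ 2) x
                (INR 2 * fst l * fst (g x) ^ pred 2 + INR 2 * snd l * snd (g x) ^ pred 2)).
  { apply is_derive_Rplus; apply is_derive_pow; assumption. }
  assert (H2' : is_derive (fun t => - snd (g t)) x (- snd l))
    by apply (is_derive_opp (fun t => snd (g t)) x (snd l) H2).
  apply is_derive_C_pair; unfold Cinv; simpl.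
  - eapply is_derive_R_eq; [apply (is_derive_div _ _ _ _ _ H1 D Hn)|].
    destruct l as [l1 l2], (g x) as [a b]; simpl in *. unfold Cdiv, Cinv; simpl.
    field. assert (Hs : a * a + b * b <> 0) by (intro E; apply Hn; nra).
    split; [|exact Hs]. intro E. apply Hs. nra.
  - eapply is_derive_R_eq; [apply (is_derive_div _ _ _ _ _ H2' D Hn)|].
    destruct l as [l1 l2], (g x) as [a b]; simpl in *. unfold Cdiv, Cinv, opp; simpl.
    field. assert (Hs : a * a + b * b <> 0) by (intro E; apply Hn; nra).
    split; [|exact Hs]. intro E. apply Hs. nra.
Qed.

Definition continuity_2d_pt_C (F : R -> R -> C) (x y : R) : Prop :=
  continuity_2d_pt (fun a b => fst (F a b)) x y /\
  continuity_2d_pt (fun a b => snd (F a b)) x y.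

Lemma continuity_2d_pt_C_const (c : C) x y : continuity_2d_pt_C (fun _ _ => c) x y.
Proof. split; apply continuity_2d_pt_const. Qed.

Lemma continuity_2d_pt_C_plus F G x y :
  continuity_2d_pt_C F x y -> continuity_2d_pt_C G x y ->
  continuity_2d_pt_C (fun a b => (F a b + G a b)%C) x y.
Proof. intros [H1 H2] [H3 H4]; split; simpl; now apply continuity_2d_pt_plus. Qed.

Lemma continuity_2d_pt_C_opp F x y :
  continuity_2d_pt_C F x y -> continuity_2d_pt_C (fun a b => (- F a b)%C) x y.
Proof. intros [H1 H2]; split; simpl; now apply continuity_2d_pt_opp. Qed.

Lemma continuity_2d_pt_C_mult F G x y :
  continuity_2d_pt_C F x y -> continuity_2d_pt_C G x y ->
  continuity_2d_pt_C (fun a b => (F a b * G a b)%C) x y.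
Proof.
  intros [H1 H2] [H3 H4]; split; simpl.
  - apply continuity_2d_pt_minus; now apply continuity_2d_pt_mult.
  - apply continuity_2d_pt_plus; now apply continuity_2d_pt_mult.
Qed.

Lemma continuity_2d_pt_C_inv F x y :
  continuity_2d_pt_C F x y -> F x y <> RtoC 0 ->
  continuity_2d_pt_C (fun a b => (/ F a b)%C) x y.
Proof.
  intros [H1 H2] Hz.
  assert (Hn : fst (F x y) ^ 2 + snd (F x y) ^ 2 <> 0).
  { intro E. apply Hz. destruct (F x y) as [a b]; simpl in E.
    apply injective_projections; simpl; nra. }
  assert (Hd : continuity_2d_pt (fun a b => / (fst (F a b) ^ 2 + snd (F a b) ^ 2)) x y).
  { apply (continuity_1d_2d_pt_comp Rinv (fun a b => fst (F a b) ^ 2 + snd (F a b) ^ 2)).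
    - apply (continuity_pt_inv id); [apply derivable_continuous_pt, derivable_pt_id | exact Hn].
    - apply continuity_2d_pt_plus; simpl;
        repeat (apply continuity_2d_pt_mult; auto); apply continuity_2d_pt_const. }
  split; unfold Cinv; simpl.
  - now apply (continuity_2d_pt_mult (fun a b => fst (F a b))).
  - apply (continuity_2d_pt_mult (fun a b => - snd (F a b))); auto.
    now apply continuity_2d_pt_opp.
Qed.

Lemma continuity_2d_pt_C_exp F x y :
  continuity_2d_pt_C F x y -> continuity_2d_pt_C (fun a b => Cexpo (F a b)) x y.
Proof.
  intros [H1 H2]. unfold Cexpo, Re, Im.
  assert (Hexp : continuity_2d_pt (fun a b => exp (fst (F a b))) x y).
  { apply (continuity_1d_2d_pt_comp exp); auto.
    apply derivable_continuous_pt, derivable_pt_exp. }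
  split; simpl; apply continuity_2d_pt_mult; auto.
  - apply (continuity_1d_2d_pt_comp cos); auto. apply continuity_cos.
  - apply (continuity_1d_2d_pt_comp sin); auto. apply continuity_sin.
Qed.

Lemma continuous_of_continuity_2d_pt_C F x y :
  continuity_2d_pt_C F x y -> continuous (U := C_R_CompleteNormedModule) (fun b => F x b) y.
Proof.
  intros [H1 H2]. apply filterlim_locally. intros eps.
  destruct (H1 eps) as [d1 P1]. destruct (H2 eps) as [d2 P2].
  assert (Hd : 0 < Rmin d1 d2) by (apply Rmin_pos; apply cond_pos).
  exists (mkposreal _ Hd). intros b Hb. simpl in Hb. unfold ball in Hb; simpl in Hb.
  unfold AbsRing_ball, abs, minus, plus, opp in Hb; simpl in Hb.
  split; unfold ball; simpl; unfold AbsRing_ball, abs, minus, plus, opp; simpl.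
  - apply P1; [rewrite Rminus_eq_0, Rabs_R0; apply cond_pos |].
    eapply Rlt_le_trans; [exact Hb | apply Rmin_l].
  - apply P2; [rewrite Rminus_eq_0, Rabs_R0; apply cond_pos |].
    eapply Rlt_le_trans; [exact Hb | apply Rmin_r].
Qed.

(** * Circles around 1/2 *)

Definition cis (th : R) : C := (cos th, sin th).

Lemma circ_jac_cis r th : circ_jac r th = (r * cis th)%C.
Proof. unfold circ_jac, cis, Cmult; simpl. f_equal; ring. Qed.

Lemma Cmod_cis th : Cmod (cis th) = 1.
Proof.
  unfold Cmod, cis; simpl. pose proof (sin2_cos2 th) as H. unfold Rsqr in H.
  replace (cos th * (cos th * 1) + sin th * (sin th * 1)) with 1 by nra. apply sqrt_1.
Qed.

Lemma Cmod_circ_jac r th : 0 <= r -> Cmod (circ_jac r th) = r.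
Proof. intros H. rewrite circ_jac_cis, Cmod_mult, Cmod_cis, Cmod_R, Rabs_pos_eq; lra. Qed.

Lemma Cmod_circ_sub_center r th : 0 <= r -> Cmod (circ r th - RtoC (1/2)) = r.
Proof.
  intros Hr. replace (circ r th - RtoC (1/2))%C with (circ_jac r th).
  - now apply Cmod_circ_jac.
  - unfold circ, circ_jac. apply injective_projections; simpl; field.
Qed.

Lemma circ_2PI r : circ r (2 * PI) = circ r 0.
Proof. unfold circ. now rewrite cos_2PI, sin_2PI, cos_0, sin_0. Qed.

Lemma cis_2PI : cis (2 * PI) = cis 0.
Proof. unfold cis. now rewrite cos_2PI, sin_2PI, cos_0, sin_0. Qed.

Lemma is_derive_C_cis th : is_derive_C cis th (Ci * cis th).
Proof. apply is_derive_C_pair; simpl; auto_derive; try easy; ring. Qed.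

Lemma is_derive_C_circ_jac_radius r th : is_derive_C (fun s => circ_jac s th) r (cis th).
Proof. apply is_derive_C_pair; simpl; auto_derive; try easy; ring. Qed.

Lemma continuity_2d_pt_cos_id2 x y : continuity_2d_pt (fun _ b => cos b) x y.
Proof.
  apply (continuity_1d_2d_pt_comp cos (fun _ b => b)).
  apply continuity_cos. apply continuity_2d_pt_id2.
Qed.

Lemma continuity_2d_pt_sin_id2 x y : continuity_2d_pt (fun _ b => sin b) x y.
Proof.
  apply (continuity_1d_2d_pt_comp sin (fun _ b => b)).
  apply continuity_sin. apply continuity_2d_pt_id2.
Qed.

Lemma continuity_2d_pt_C_cis x y : continuity_2d_pt_C (fun _ b => cis b) x y.
Proof. split; simpl; [apply continuity_2d_pt_cos_id2 | apply continuity_2d_pt_sin_id2]. Qed.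

Lemma continuity_2d_pt_C_circ_jac x y : continuity_2d_pt_C circ_jac x y.
Proof.
  split; simpl; apply continuity_2d_pt_mult;
    auto using continuity_2d_pt_id1, continuity_2d_pt_cos_id2, continuity_2d_pt_sin_id2.
Qed.

Lemma continuity_2d_pt_C_circ x y : continuity_2d_pt_C circ x y.
Proof.
  destruct (continuity_2d_pt_C_circ_jac x y) as [H1 H2].
  split; simpl; [apply continuity_2d_pt_plus; [apply continuity_2d_pt_const|] |]; assumption.
Qed.

(** * Holomorphy outside a disc *)

(* Holomorphy of [f] (with derivative [f']) on [|z - 1/2| > rh], in the polar
   coordinates [z = circ r th]: the chain rule along rays and along circles,
   plus joint continuity of [f] and [f'] in [(r, th)]. *)
Definition holo_outside_with (rh : R) (f f' : C -> C) : Prop :=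
  forall r th, rh < r ->
    is_derive_C (fun s => f (circ s th)) r (cis th * f' (circ r th)) /\
    is_derive_C (fun s => f (circ r s)) th (Ci * r * cis th * f' (circ r th)) /\
    continuity_2d_pt_C (fun a b => f (circ a b)) r th /\
    continuity_2d_pt_C (fun a b => f' (circ a b)) r th.

Definition holo_outside (rh : R) (f : C -> C) : Prop := exists f', holo_outside_with rh f f'.

Section HoloOutsideWith.
Variable rh : R.

Lemma holo_outside_with_const (c : C) : holo_outside_with rh (fun _ => c) (fun _ => RtoC 0).
Proof.
  intros r th _. refine (conj _ (conj _ (conj _ _))); try apply continuity_2d_pt_C_const;
    (eapply is_derive_C_eq; [apply is_derive_C_const | ring]).
Qed.

Lemma holo_outside_with_id : holo_outside_with rh (fun z => z) (fun _ => RtoC 1).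
Proof.
  intros r th _. refine (conj _ (conj _ (conj _ _)));
    [.. | apply continuity_2d_pt_C_circ | apply continuity_2d_pt_C_const];
    apply is_derive_C_pair; simpl; auto_derive; try easy; ring.
Qed.

Lemma holo_outside_with_plus f f' g g' :
  holo_outside_with rh f f' -> holo_outside_with rh g g' ->
  holo_outside_with rh (fun z => (f z + g z)%C) (fun z => (f' z + g' z)%C).
Proof.
  intros Hf Hg r th Hr.
  destruct (Hf r th Hr) as (A1 & A2 & A3 & A4), (Hg r th Hr) as (B1 & B2 & B3 & B4).
  refine (conj _ (conj _ (conj _ _))).
  - eapply is_derive_C_eq; [apply (is_derive_C_plus _ _ _ _ _ A1 B1) | ring].
  - eapply is_derive_C_eq; [apply (is_derive_C_plus _ _ _ _ _ A2 B2) | ring].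
  - now apply (continuity_2d_pt_C_plus (fun a b => f (circ a b)) (fun a b => g (circ a b))).
  - now apply (continuity_2d_pt_C_plus (fun a b => f' (circ a b)) (fun a b => g' (circ a b))).
Qed.

Lemma holo_outside_with_mult f f' g g' :
  holo_outside_with rh f f' -> holo_outside_with rh g g' ->
  holo_outside_with rh (fun z => (f z * g z)%C) (fun z => (f' z * g z + f z * g' z)%C).
Proof.
  intros Hf Hg r th Hr.
  destruct (Hf r th Hr) as (A1 & A2 & A3 & A4), (Hg r th Hr) as (B1 & B2 & B3 & B4).
  refine (conj _ (conj _ (conj _ _))).
  - eapply is_derive_C_eq; [apply (is_derive_C_mult _ _ _ _ _ A1 B1) | ring].
  - eapply is_derive_C_eq; [apply (is_derive_C_mult _ _ _ _ _ A2 B2) | ring].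
  - now apply (continuity_2d_pt_C_mult (fun a b => f (circ a b)) (fun a b => g (circ a b))).
  - apply (continuity_2d_pt_C_plus (fun a b => (f' (circ a b) * g (circ a b))%C)
                                   (fun a b => (f (circ a b) * g' (circ a b))%C)).
    + now apply (continuity_2d_pt_C_mult (fun a b => f' (circ a b)) (fun a b => g (circ a b))).
    + now apply (continuity_2d_pt_C_mult (fun a b => f (circ a b)) (fun a b => g' (circ a b))).
Qed.

Lemma holo_outside_with_inv f f' :
  holo_outside_with rh f f' -> (forall r th, rh < r -> f (circ r th) <> RtoC 0) ->
  holo_outside_with rh (fun z => (/ f z)%C) (fun z => (- (f' z / (f z * f z)))%C).
Proof.
  intros Hf Hnz r th Hr. destruct (Hf r th Hr) as (A1 & A2 & A3 & A4).
  pose proof (Hnz r th Hr) as Hz.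
  assert (Hff := continuity_2d_pt_C_mult _ _ _ _ A3 A3).
  refine (conj _ (conj _ (conj _ _))).
  - eapply is_derive_C_eq; [apply (is_derive_C_inv _ _ _ A1 Hz) | unfold Cdiv; ring].
  - eapply is_derive_C_eq; [apply (is_derive_C_inv _ _ _ A2 Hz) | unfold Cdiv; ring].
  - now apply (continuity_2d_pt_C_inv (fun a b => f (circ a b))).
  - apply continuity_2d_pt_C_opp, continuity_2d_pt_C_mult; [assumption|].
    apply (continuity_2d_pt_C_inv (fun a b => (f (circ a b) * f (circ a b))%C)); [assumption|].
    now apply Cmult_neq_0.
Qed.

Lemma holo_outside_with_exp f f' :
  holo_outside_with rh f f' ->
  holo_outside_with rh (fun z => Cexpo (f z)) (fun z => (Cexpo (f z) * f' z)%C).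
Proof.
  intros Hf r th Hr. destruct (Hf r th Hr) as (A1 & A2 & A3 & A4).
  assert (He := continuity_2d_pt_C_exp _ _ _ A3).
  refine (conj _ (conj _ (conj _ _))).
  - eapply is_derive_C_eq; [apply (is_derive_C_exp _ _ _ A1) | ring].
  - eapply is_derive_C_eq; [apply (is_derive_C_exp _ _ _ A2) | ring].
  - exact He.
  - now apply (continuity_2d_pt_C_mult (fun a b => Cexpo (f (circ a b)))
                                       (fun a b => f' (circ a b))).
Qed.

End HoloOutsideWith.

Section HoloOutside.
Variable rh : R.

Lemma holo_outside_const (c : C) : holo_outside rh (fun _ => c).
Proof. eexists; apply holo_outside_with_const. Qed.

Lemma holo_outside_id : holo_outside rh (fun z => z).
Proof. eexists; apply holo_outside_with_id. Qed.

Lemma holo_outside_plus f g :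
  holo_outside rh f -> holo_outside rh g -> holo_outside rh (fun z => (f z + g z)%C).
Proof. intros [f' Hf] [g' Hg]. eexists; apply holo_outside_with_plus; eassumption. Qed.

Lemma holo_outside_mult f g :
  holo_outside rh f -> holo_outside rh g -> holo_outside rh (fun z => (f z * g z)%C).
Proof. intros [f' Hf] [g' Hg]. eexists; apply holo_outside_with_mult; eassumption. Qed.

Lemma holo_outside_inv f :
  holo_outside rh f -> (forall r th, rh < r -> f (circ r th) <> RtoC 0) ->
  holo_outside rh (fun z => (/ f z)%C).
Proof. intros [f' Hf] Hn. eexists; apply holo_outside_with_inv; eassumption. Qed.

Lemma holo_outside_exp f : holo_outside rh f -> holo_outside rh (fun z => Cexpo (f z)).
Proof. intros [f' Hf]. eexists; apply holo_outside_with_exp; eassumption. Qed.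

Lemma holo_outside_sub_const (c : C) : holo_outside rh (fun z => (z - c)%C).
Proof. apply holo_outside_plus; [apply holo_outside_id | apply holo_outside_const]. Qed.

Lemma holo_outside_div f g :
  holo_outside rh f -> holo_outside rh g -> (forall r th, rh < r -> g (circ r th) <> RtoC 0) ->
  holo_outside rh (fun z => (f z / g z)%C).
Proof. intros Hf Hg Hn. apply holo_outside_mult; [|apply holo_outside_inv]; assumption. Qed.

Lemma holo_outside_pow f n : holo_outside rh f -> holo_outside rh (fun z => (f z ^ n)%C).
Proof.
  intros H. induction n as [|n IH]; simpl.
  - apply holo_outside_const.
  - now apply holo_outside_mult.
Qed.

Lemma holo_outside_zpow f n :
  holo_outside rh f -> (forall r th, rh < r -> f (circ r th) <> RtoC 0) ->
  holo_outside rh (fun z => Czpow (f z) n).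
Proof.
  intros H Hn. destruct n as [|p|p]; simpl.
  - apply holo_outside_const.
  - now apply holo_outside_pow.
  - apply holo_outside_inv; [now apply holo_outside_pow|].
    intros r th Hr. now apply Cpow_nz, Hn.
Qed.

End HoloOutside.

Lemma rho_ge_half alpha : 1/2 <= rho alpha.
Proof. apply Rmax_l. Qed.

Lemma circ_sub_real_neq_0 (a r th : R) : Rabs (a - 1/2) < r -> (circ r th - a)%C <> RtoC 0.
Proof.
  intros Ha E. assert (Hr : 0 <= r) by (pose proof (Rabs_pos (a - 1/2)); lra).
  assert (Hc : Cmod (circ r th - RtoC (1/2)) = Rabs (a - 1/2)).
  { replace (circ r th - RtoC (1/2))%C with (RtoC a - RtoC (1/2) + (circ r th - a))%C by ring.
    rewrite E, Cplus_0_r. unfold Cmod, Cminus; simpl.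
    rewrite <- sqrt_Rsqr_abs. unfold Rsqr. f_equal. ring. }
  rewrite Cmod_circ_sub_center in Hc; lra.
Qed.

Lemma circ_avoids_poles alpha r th : rho alpha < r ->
  circ r th <> RtoC 0 /\ (circ r th - 1)%C <> RtoC 0 /\ (circ r th - alpha)%C <> RtoC 0.
Proof.
  intros Hr. pose proof (rho_ge_half alpha). pose proof (Rmax_r (1/2) (Rabs (alpha - 1/2))).
  refine (conj _ (conj _ _)).
  - intros E. apply (circ_sub_real_neq_0 0 r th); [rewrite Rabs_left; lra|].
    rewrite E. ring.
  - apply circ_sub_real_neq_0. rewrite Rabs_pos_eq; lra.
  - apply circ_sub_real_neq_0. unfold rho in Hr. lra.
Qed.

Lemma holo_outside_Gfac alpha t k x : holo_outside (rho alpha) (Gfac alpha t k x).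
Proof.
  assert (Hp := circ_avoids_poles alpha).
  unfold Gfac. apply holo_outside_div.
  - apply holo_outside_mult.
    + apply holo_outside_zpow; [apply holo_outside_id | apply Hp].
    + apply holo_outside_exp, holo_outside_mult;
        [apply holo_outside_const | apply holo_outside_sub_const].
  - apply holo_outside_mult; [apply holo_outside_sub_const|].
    apply holo_outside_zpow; [apply holo_outside_sub_const | apply Hp].
  - intros r th Hr. destruct (Hp r th Hr) as (_ & H1 & Ha).
    apply Cmult_neq_0; [exact Ha|].
    destruct k as [|p|p]; simpl.
    + intro E. injection E. lra.
    + now apply Cpow_nz.
    + now apply Cinv_neq_0, Cpow_nz.
Qed.

(** * Integrals depending on a parameter *)

Lemma RInt_C_R_pair (f : R -> C) a b :
  ex_RInt (V := C_R_CompleteNormedModule) f a b ->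
  RInt (V := C_R_CompleteNormedModule) f a b =
  (RInt (fun t => fst (f t)) a b, RInt (fun t => snd (f t)) a b).
Proof.
  intros H. apply RInt_correct in H.
  apply is_RInt_fct_extend_fst in H as H1. apply is_RInt_fct_extend_snd in H as H2.
  assert (E1 : RInt (fun t => fst (f t)) a b = fst (RInt (V := C_R_CompleteNormedModule) f a b))
    by (apply is_RInt_unique; exact H1).
  assert (E2 : RInt (fun t => snd (f t)) a b = snd (RInt (V := C_R_CompleteNormedModule) f a b))
    by (apply is_RInt_unique; exact H2).
  rewrite E1, E2. now destruct (RInt (V := C_R_CompleteNormedModule) f a b).
Qed.

Lemma is_RInt_C_mult_l (f : R -> C) a b (l c : C) :
  is_RInt (V := C_R_CompleteNormedModule) f a b l ->
  is_RInt (V := C_R_CompleteNormedModule) (fun t => (c * f t)%C) a b (c * l)%C.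
Proof.
  intros H. destruct c as [c1 c2], l as [l1 l2].
  apply is_RInt_ext with
    (fun t => (c1 * fst (f t) - c2 * snd (f t), c1 * snd (f t) + c2 * fst (f t))).
  { intros t _. now destruct (f t). }
  assert (H1 := is_RInt_fct_extend_fst (U := R_NormedModule) (V := R_NormedModule) f a b _ H).
  assert (H2 := is_RInt_fct_extend_snd (U := R_NormedModule) (V := R_NormedModule) f a b _ H).
  simpl in H1, H2.
  apply (is_RInt_fct_extend_pair (U := R_NormedModule) (V := R_NormedModule)); simpl.
  - apply (is_RInt_minus (V := R_NormedModule) (fun t => c1 * fst (f t)) (fun t => c2 * snd (f t)));
      apply (is_RInt_scal (V := R_NormedModule)); assumption.
  - apply (is_RInt_plus (V := R_NormedModule) (fun t => c1 * snd (f t)) (fun t => c2 * fst (f t)));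
      apply (is_RInt_scal (V := R_NormedModule)); assumption.
Qed.

Lemma is_RInt_C_mult_r (f : R -> C) a b (l c : C) :
  is_RInt (V := C_R_CompleteNormedModule) f a b l ->
  is_RInt (V := C_R_CompleteNormedModule) (fun t => (f t * c)%C) a b (l * c)%C.
Proof.
  intros H. apply is_RInt_ext with (fun t => (c * f t)%C); [intros x _; apply Cmult_comm|].
  replace (l * c)%C with (c * l)%C by apply Cmult_comm. apply (is_RInt_C_mult_l f a b l c H).
Qed.

Lemma is_derive_RInt_param_with (F dF : R -> R -> R) (r a b : R) :
  locally r (fun y => forall t, is_derive (fun u => F u t) y (dF y t)) ->
  (forall t, Rmin a b <= t <= Rmax a b -> continuity_2d_pt dF r t) ->
  locally r (fun y => ex_RInt (F y) a b) ->
  is_derive (fun y => RInt (F y) a b) r (RInt (dF r) a b).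
Proof.
  intros HD Hc Hi.
  assert (HDr : forall t, Derive (fun u => F u t) r = dF r t).
  { intros t. apply is_derive_unique, (locally_singleton _ _ HD). }
  rewrite (RInt_ext (dF r) (fun t => Derive (fun u => F u t) r)) by (intros; now rewrite HDr).
  apply is_derive_RInt_param; [| | exact Hi].
  - apply filter_imp with (2 := HD). intros y Hy t _. eexists. apply Hy.
  - intros t Ht. apply continuity_2d_pt_ext_loc with dF; [|now apply Hc].
    destruct HD as [d Hd]. exists d. intros u v Hu _.
    symmetry. now apply is_derive_unique, Hd.
Qed.

Lemma is_derive_C_RInt_param (F dF : R -> R -> C) (r a b : R) :
  locally r (fun y => forall t, is_derive_C (fun u => F u t) y (dF y t)) ->
  (forall t, Rmin a b <= t <= Rmax a b -> continuity_2d_pt_C dF r t) ->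
  locally r (fun y => ex_RInt (V := C_R_CompleteNormedModule) (F y) a b) ->
  ex_RInt (V := C_R_CompleteNormedModule) (dF r) a b ->
  is_derive_C (fun y => RInt (V := C_R_CompleteNormedModule) (F y) a b) r
    (RInt (V := C_R_CompleteNormedModule) (dF r) a b).
Proof.
  intros HD Hc Hi HiD.
  apply (is_derive_ext_loc (K := R_AbsRing) (V := C_R_NormedModule)) with
    (fun y => (RInt (fun t => fst (F y t)) a b, RInt (fun t => snd (F y t)) a b)).
  { apply filter_imp with (2 := Hi). intros y Hy. symmetry. now apply RInt_C_R_pair. }
  rewrite (RInt_C_R_pair _ _ _ HiD).
  apply is_derive_C_pair; cbn [fst snd].
  - apply (is_derive_RInt_param_with (fun u t => fst (F u t)) (fun u t => fst (dF u t))).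
    + apply filter_imp with (2 := HD). intros y Hy t. apply is_derive_C_fst, Hy.
    + intros t Ht. apply Hc, Ht.
    + apply filter_imp with (2 := Hi). intros y Hy.
      now apply (ex_RInt_fct_extend_fst (U := R_NormedModule) (V := R_NormedModule)).
  - apply (is_derive_RInt_param_with (fun u t => snd (F u t)) (fun u t => snd (dF u t))).
    + apply filter_imp with (2 := HD). intros y Hy t. apply is_derive_C_snd, Hy.
    + intros t Ht. apply Hc, Ht.
    + apply filter_imp with (2 := Hi). intros y Hy.
      now apply (ex_RInt_fct_extend_snd (U := R_NormedModule) (V := R_NormedModule)).
Qed.

(** * Circle integrals *)

Definition circle_integrand (f : C -> C) (r th : R) : C := f (circ r th) * circ_jac r th.

Lemma Cmod_circle_integrand (f : C -> C) r th :
  0 <= r -> Cmod (circle_integrand f r th) = Cmod (f (circ r th)) * r.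
Proof. intros Hr. unfold circle_integrand. now rewrite Cmod_mult, Cmod_circ_jac. Qed.

Definition circle_int (r : R) (f : C -> C) : C :=
  RInt (V := C_R_CompleteNormedModule) (circle_integrand f r) 0 (2 * PI).

Section RadiusIndependence.
Variables (rh : R) (f f' : C -> C).
Hypothesis Hf : holo_outside_with rh f f'.

Let radial_deriv (r th : R) : C :=
  cis th * f' (circ r th) * circ_jac r th + f (circ r th) * cis th.

Lemma is_derive_circle_integrand_radius r th :
  rh < r -> is_derive_C (fun s => circle_integrand f s th) r (radial_deriv r th).
Proof.
  intros Hr. destruct (Hf r th Hr) as (A1 & _).
  apply (is_derive_C_mult (fun s => f (circ s th)) (fun s => circ_jac s th)); [exact A1|].
  apply is_derive_C_circ_jac_radius.
Qed.

Lemma continuity_2d_pt_C_circle_integrand r th :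
  rh < r -> continuity_2d_pt_C (circle_integrand f) r th.
Proof.
  intros Hr. destruct (Hf r th Hr) as (_ & _ & A3 & _).
  apply (continuity_2d_pt_C_mult (fun a b => f (circ a b))); [exact A3|].
  apply continuity_2d_pt_C_circ_jac.
Qed.

Lemma continuity_2d_pt_C_radial_deriv r th : rh < r -> continuity_2d_pt_C radial_deriv r th.
Proof.
  intros Hr. destruct (Hf r th Hr) as (_ & _ & A3 & A4).
  assert (Hcis := continuity_2d_pt_C_cis r th).
  assert (Hjac := continuity_2d_pt_C_circ_jac r th).
  apply (continuity_2d_pt_C_plus (fun a b => (cis b * f' (circ a b) * circ_jac a b)%C)
                                 (fun a b => (f (circ a b) * cis b)%C)).
  - apply (continuity_2d_pt_C_mult (fun a b => (cis b * f' (circ a b))%C)); [|exact Hjac].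
    now apply (continuity_2d_pt_C_mult (fun a b => cis b)).
  - now apply (continuity_2d_pt_C_mult (fun a b => f (circ a b))).
Qed.

(* [radial_deriv r th = - Ci * d/dth (f (circ r th) * cis th)], and the latter
   integrates to zero over a full period. *)
Lemma is_RInt_radial_deriv r :
  rh < r -> is_RInt (V := C_R_CompleteNormedModule) (radial_deriv r) 0 (2 * PI) (RtoC 0).
Proof.
  intros Hr.
  set (E th := (f (circ r th) * cis th)%C).
  set (dE th := (Ci * r * cis th * f' (circ r th) * cis th + f (circ r th) * (Ci * cis th))%C).
  assert (HE : forall th, is_derive_C E th (dE th)).
  { intros th. destruct (Hf r th Hr) as (_ & A2 & _).
    apply (is_derive_C_mult (fun s => f (circ r s)) cis); [exact A2 | apply is_derive_C_cis]. }
  assert (HcE : forall th, continuous (U := C_R_CompleteNormedModule) dE th).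
  { intros th. destruct (Hf r th Hr) as (_ & _ & A3 & A4).
    assert (Hcis := continuity_2d_pt_C_cis r th).
    apply (continuous_of_continuity_2d_pt_C
      (fun a b => (Ci * a * cis b * f' (circ a b) * cis b + f (circ a b) * (Ci * cis b))%C)).
    assert (Hid : continuity_2d_pt_C (fun a _ => RtoC a) r th)
      by (split; simpl; [apply continuity_2d_pt_id1 | apply continuity_2d_pt_const]).
    assert (HCi := continuity_2d_pt_C_const Ci r th).
    apply continuity_2d_pt_C_plus.
    - apply continuity_2d_pt_C_mult; [|exact Hcis].
      apply continuity_2d_pt_C_mult; [|exact A4].
      apply continuity_2d_pt_C_mult; [|exact Hcis].
      now apply continuity_2d_pt_C_mult.
    - apply continuity_2d_pt_C_mult; [exact A3|].
      now apply continuity_2d_pt_C_mult. }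
  assert (HI : is_RInt (V := C_R_CompleteNormedModule) dE 0 (2 * PI) (RtoC 0)).
  { replace (RtoC 0) with (minus (E (2 * PI)) (E 0)).
    - apply (is_RInt_derive (V := C_R_CompleteNormedModule) E dE); intros; [apply HE | apply HcE].
    - unfold E. rewrite circ_2PI, cis_2PI.
      exact (minus_eq_zero (G := C_R_CompleteNormedModule) _). }
  apply is_RInt_ext with (fun th => (- Ci * dE th)%C).
  { intros th _. unfold radial_deriv, dE. rewrite circ_jac_cis.
    apply injective_projections; simpl; ring. }
  replace (RtoC 0) with (- Ci * 0)%C by ring.
  now apply is_RInt_C_mult_l.
Qed.

Lemma ex_RInt_circle_integrand r :
  rh < r -> ex_RInt (V := C_R_CompleteNormedModule) (circle_integrand f r) 0 (2 * PI).
Proof.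
  intros Hr. apply ex_RInt_continuous. intros t _.
  now apply continuous_of_continuity_2d_pt_C, continuity_2d_pt_C_circle_integrand.
Qed.

Lemma is_derive_circle_int r : rh < r -> is_derive_C (fun s => circle_int s f) r 0.
Proof.
  intros Hr. assert (Hloc := open_gt rh r Hr).
  assert (HD := is_RInt_radial_deriv r Hr).
  rewrite <- (is_RInt_unique _ _ _ _ HD).
  apply is_derive_C_RInt_param.
  - apply filter_imp with (2 := Hloc). intros y Hy t.
    now apply is_derive_circle_integrand_radius.
  - intros t _. now apply continuity_2d_pt_C_radial_deriv.
  - apply filter_imp with (2 := Hloc). intros y Hy. now apply ex_RInt_circle_integrand.
  - eexists. exact HD.
Qed.

Lemma circle_int_radius_indep_with r1 r2 :
  rh < r1 -> rh < r2 -> circle_int r1 f = circle_int r2 f.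
Proof.
  assert (K : forall a b, rh < a -> a < b -> circle_int a f = circle_int b f).
  { intros a b Ha Hab.
    apply (eq_is_derive (V := C_R_NormedModule) (fun s => circle_int s f)); [|exact Hab].
    intros t Ht. apply is_derive_circle_int. lra. }
  intros H1 H2. destruct (Rtotal_order r1 r2) as [H|[H|H]].
  - now apply K.
  - now subst.
  - symmetry. now apply K.
Qed.

End RadiusIndependence.

Section HoloCircleIntegral.
Variables (rh : R) (f : C -> C).
Hypothesis Hf : holo_outside rh f.

Lemma circle_int_radius_indep r1 r2 :
  rh < r1 -> rh < r2 -> circle_int r1 f = circle_int r2 f.
Proof. destruct Hf as [f' Hf']. now apply (circle_int_radius_indep_with rh f f'). Qed.

Lemma is_RInt_circle_int r :
  rh < r ->
  is_RInt (V := C_R_CompleteNormedModule) (circle_integrand f r) 0 (2 * PI) (circle_int r f).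
Proof.
  intros Hr. destruct Hf as [f' Hf'].
  now apply (RInt_correct (V := C_R_CompleteNormedModule)), (ex_RInt_circle_integrand rh f f').
Qed.

Lemma holo_outside_bounded_on_circle r :
  rh < r -> exists M, 0 <= M /\ forall th, 0 <= th <= 2 * PI -> Cmod (f (circ r th)) <= M.
Proof.
  intros Hr. destruct Hf as [f' Hf'].
  destruct (bounded_continuity (K := R_AbsRing) (V := C_R_NormedModule) (fun th => f (circ r th))
              0 (2 * PI)) as [M HM].
  - intros x _. apply (continuous_of_continuity_2d_pt_C (fun a b => f (circ a b))).
    now destruct (Hf' r x Hr) as (_ & _ & H & _).
  - exists M. split.
    + apply Rle_trans with (Cmod (f (circ r 0))); [apply Cmod_ge_0|].
      rewrite <- norm_C_R. left. apply HM. pose proof PI_RGT_0. lra.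
    + intros th Hth. rewrite <- norm_C_R. left. now apply HM.
Qed.

End HoloCircleIntegral.

(** * Iterated integrals and uniform limits *)

Lemma is_lim_seq_0_eventually_lt (u : nat -> R) :
  is_lim_seq u 0 -> forall e : posreal, eventually (fun n => u n < e).
Proof.
  intros H e. apply is_lim_seq_spec in H. destruct (H e) as [N HN].
  exists N. intros n Hn. specialize (HN n Hn). apply Rabs_lt_between in HN. lra.
Qed.

Definition clamp (a b x : R) : R := Rmax a (Rmin b x).

Lemma clamp_in a b x : a <= b -> a <= clamp a b x <= b.
Proof.
  intros H. unfold clamp. split; [apply Rmax_l|].
  apply Rmax_lub; [exact H | apply Rmin_l].
Qed.

Lemma is_RInt_clamp (f : R -> C) a b l :
  a <= b ->
  is_RInt (V := C_R_CompleteNormedModule) f a b l <->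
  is_RInt (V := C_R_CompleteNormedModule) (fun x => f (clamp a b x)) a b l.
Proof.
  intros H.
  assert (E : forall x, Rmin a b < x < Rmax a b -> f x = f (clamp a b x)).
  { intros x Hx. rewrite Rmin_left, Rmax_right in Hx by lra.
    unfold clamp. now rewrite Rmin_right, Rmax_right by lra. }
  split; intros Hf; eapply is_RInt_ext; try exact Hf; intros; [|symmetry]; now apply E.
Qed.

(* [clamp] extends [fN] and [f] off [a, b], so that uniform convergence on
   [a, b] is convergence in the function space used by [filterlim_RInt]. *)
Lemma is_RInt_uniform_limit (fN : nat -> R -> C) (f : R -> C) (IN : nat -> C) (eps : nat -> R) a b :
  a <= b ->
  (forall N, is_RInt (V := C_R_CompleteNormedModule) (fN N) a b (IN N)) ->
  (forall N x, a <= x <= b -> Cmod (fN N x - f x) <= eps N) ->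
  is_lim_seq eps 0 ->
  exists I : C, filterlim IN eventually (locally (T := C_R_CompleteNormedModule) I) /\
    is_RInt (V := C_R_CompleteNormedModule) f a b I.
Proof.
  intros Hab HI Hb He.
  destruct (filterlim_RInt (V := C_R_CompleteNormedModule) (fun N x => fN N (clamp a b x)) a b
              eventually eventually_filter (fun x => f (clamp a b x)) IN) as [I [H1 H2]].
  - intros N. apply (is_RInt_clamp (fN N) a b (IN N) Hab), HI.
  - apply filterlim_locally. intros e.
    destruct (is_lim_seq_0_eventually_lt eps He e) as [N0 HN0].
    exists N0. intros N HN t. apply ball_C_R.
    eapply Rle_lt_trans; [apply Hb, clamp_in, Hab | now apply HN0].
  - exists I. split; [exact H1 | now apply (is_RInt_clamp f a b I Hab)].
Qed.

Fixpoint psum (f : nat -> C) (N : nat) : C :=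
  match N with O => 0 | S N => psum f N + f N end.

Lemma psum_ext (f g : nat -> C) N : (forall n, (n < N)%nat -> f n = g n) -> psum f N = psum g N.
Proof. induction N; intros H; simpl; auto. rewrite IHN, H; auto. Qed.

Lemma psum_mult_l (c : C) f N : (c * psum f N)%C = psum (fun n => (c * f n)%C) N.
Proof. induction N; simpl; [ring|]. rewrite <- IHN. ring. Qed.

Lemma psum_mult_r (c : C) f N : (psum f N * c)%C = psum (fun n => (f n * c)%C) N.
Proof. induction N; simpl; [ring|]. rewrite <- IHN. ring. Qed.

Lemma is_RInt_C_eq (f : R -> C) a b (l l' : C) :
  is_RInt (V := C_R_CompleteNormedModule) f a b l -> l = l' ->
  is_RInt (V := C_R_CompleteNormedModule) f a b l'.
Proof. now intros H <-. Qed.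

Lemma is_RInt_psum (f : nat -> R -> C) (l : nat -> C) a b N :
  (forall n, (n < N)%nat -> is_RInt (V := C_R_CompleteNormedModule) (f n) a b (l n)) ->
  is_RInt (V := C_R_CompleteNormedModule) (fun x => psum (fun n => f n x) N) a b (psum l N).
Proof.
  induction N; intros H; simpl.
  - apply is_RInt_C_eq with (scal (V := C_R_CompleteNormedModule) (b - a) (RtoC 0)).
    + apply (is_RInt_const (V := C_R_CompleteNormedModule)).
    + apply injective_projections; simpl; unfold mult; simpl; change (@eq R ((b - a) * 0) 0); ring.
  - apply (is_RInt_plus (V := C_R_CompleteNormedModule)); auto.
Qed.

Definition is_RInt2 (F : R -> R -> C) (a b : R) (I : C) : Prop :=
  (forall th, a <= th <= b -> ex_RInt (V := C_R_CompleteNormedModule) (F th) a b) /\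
  is_RInt (V := C_R_CompleteNormedModule)
    (fun th => RInt (V := C_R_CompleteNormedModule) (F th) a b) a b I.

Definition RInt2 (F : R -> R -> C) (a b : R) : C :=
  RInt (V := C_R_CompleteNormedModule)
    (fun th => RInt (V := C_R_CompleteNormedModule) (F th) a b) a b.

Lemma RInt2_unique F a b I : is_RInt2 F a b I -> RInt2 F a b = I.
Proof. intros [_ H]. exact (is_RInt_unique _ _ _ _ H). Qed.

Lemma is_RInt2_ext (F G : R -> R -> C) a b I :
  a <= b -> (forall th ph, a <= th <= b -> a <= ph <= b -> F th ph = G th ph) ->
  is_RInt2 F a b I -> is_RInt2 G a b I.
Proof.
  intros Hab E [Hin Hout].
  assert (Hi : forall th, a <= th <= b -> forall ph, Rmin a b < ph < Rmax a b -> F th ph = G th ph).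
  { intros th Hth ph Hph. rewrite Rmin_left, Rmax_right in Hph by exact Hab. apply E; lra. }
  split.
  - intros th Hth. eapply ex_RInt_ext; [apply Hi, Hth | apply Hin, Hth].
  - eapply is_RInt_ext; [|exact Hout]. intros th Hth.
    rewrite Rmin_left, Rmax_right in Hth by exact Hab.
    apply RInt_ext. apply Hi. lra.
Qed.

Lemma is_RInt2_prod (f g : R -> C) a b (If Ig : C) :
  is_RInt (V := C_R_CompleteNormedModule) f a b If ->
  is_RInt (V := C_R_CompleteNormedModule) g a b Ig ->
  is_RInt2 (fun th ph => (f th * g ph)%C) a b (If * Ig)%C.
Proof.
  intros Hf Hg.
  assert (Hin : forall th, is_RInt (V := C_R_CompleteNormedModule)
      (fun ph => (f th * g ph)%C) a b (f th * Ig)%C) by (intros th; now apply is_RInt_C_mult_l).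
  split.
  - intros th _. eexists. apply Hin.
  - apply (is_RInt_ext (V := C_R_CompleteNormedModule)) with (fun th => (f th * Ig)%C);
      [|now apply is_RInt_C_mult_r].
    intros th _. symmetry. apply is_RInt_unique, Hin.
Qed.

Lemma is_RInt2_scal (c : C) F a b I :
  a <= b -> is_RInt2 F a b I -> is_RInt2 (fun th ph => (c * F th ph)%C) a b (c * I)%C.
Proof.
  intros Hab [Hin Hout].
  assert (Hc : forall th, a <= th <= b -> is_RInt (V := C_R_CompleteNormedModule)
      (fun ph => (c * F th ph)%C) a b (c * RInt (V := C_R_CompleteNormedModule) (F th) a b)%C)
    by (intros th Hth; apply is_RInt_C_mult_l, RInt_correct, Hin, Hth).
  split.
  - intros th Hth. eexists. now apply Hc.
  - apply (is_RInt_ext (V := C_R_CompleteNormedModule))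
      with (fun th => (c * RInt (V := C_R_CompleteNormedModule) (F th) a b)%C);
      [|now apply is_RInt_C_mult_l].
    intros th Hth. rewrite Rmin_left, Rmax_right in Hth by exact Hab.
    symmetry. apply is_RInt_unique, Hc. lra.
Qed.

Lemma is_RInt2_psum (T : nat -> R -> R -> C) (I : nat -> C) a b M :
  a <= b -> (forall m, (m < M)%nat -> is_RInt2 (T m) a b (I m)) ->
  is_RInt2 (fun th ph => psum (fun m => T m th ph) M) a b (psum I M).
Proof.
  intros Hab HT.
  assert (Hin : forall th, a <= th <= b -> is_RInt (V := C_R_CompleteNormedModule)
      (fun ph => psum (fun m => T m th ph) M) a b
      (psum (fun m => RInt (V := C_R_CompleteNormedModule) (T m th) a b) M)).
  { intros th Hth. apply is_RInt_psum. intros m Hm. apply RInt_correct, (proj1 (HT m Hm)), Hth. }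
  split.
  - intros th Hth. eexists. now apply Hin.
  - apply (is_RInt_ext (V := C_R_CompleteNormedModule))
      with (fun th => psum (fun m => RInt (V := C_R_CompleteNormedModule) (T m th) a b) M).
    + intros th Hth. rewrite Rmin_left, Rmax_right in Hth by exact Hab.
      symmetry. apply is_RInt_unique, Hin. lra.
    + apply (is_RInt_psum (fun m th => RInt (V := C_R_CompleteNormedModule) (T m th) a b)).
      intros m Hm. apply (HT m Hm).
Qed.

Lemma is_RInt2_uniform_limit (FN : nat -> R -> R -> C) (F : R -> R -> C) (SN : nat -> C)
    (eps : nat -> R) a b :
  a <= b ->
  (forall N, is_RInt2 (FN N) a b (SN N)) ->
  (forall N th ph, a <= th <= b -> a <= ph <= b -> Cmod (FN N th ph - F th ph) <= eps N) ->
  is_lim_seq eps 0 ->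
  exists L : C, filterlim SN eventually (locally (T := C_R_CompleteNormedModule) L) /\
    is_RInt2 F a b L.
Proof.
  intros Hab HF Hb He.
  assert (HFN : forall N th, a <= th <= b -> is_RInt (V := C_R_CompleteNormedModule)
      (FN N th) a b (RInt (V := C_R_CompleteNormedModule) (FN N th) a b))
    by (intros N th Hth; apply RInt_correct, (proj1 (HF N)), Hth).
  assert (Hex : forall th, a <= th <= b -> ex_RInt (V := C_R_CompleteNormedModule) (F th) a b).
  { intros th Hth.
    destruct (is_RInt_uniform_limit (fun N => FN N th) (F th)
      (fun N => RInt (V := C_R_CompleteNormedModule) (FN N th) a b) eps a b) as [I [_ HI]]; auto.
    now exists I. }
  assert (Hunif : forall N th, a <= th <= b ->
     Cmod (RInt (V := C_R_CompleteNormedModule) (FN N th) a b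
           - RInt (V := C_R_CompleteNormedModule) (F th) a b) <= (b - a) * eps N).
  { intros N th Hth. rewrite <- norm_C_R.
    apply (norm_RInt_le_const (V := C_R_NormedModule) (fun x => (FN N th x - F th x)%C));
      [exact Hab | intros x Hx; rewrite norm_C_R; now apply Hb |].
    apply (is_RInt_minus (V := C_R_NormedModule)); [now apply HFN|].
    exact (RInt_correct (V := C_R_CompleteNormedModule) _ _ _ (Hex th Hth)). }
  destruct (is_RInt_uniform_limit (fun N th => RInt (V := C_R_CompleteNormedModule) (FN N th) a b)
              (fun th => RInt (V := C_R_CompleteNormedModule) (F th) a b)
              SN (fun N => (b - a) * eps N) a b) as [L [H1 H2]]; auto.
  - intros N. apply (proj2 (HF N)).
  - replace (Finite 0) with (Rbar_mult (b - a) 0) by (simpl; f_equal; ring).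
    now apply is_lim_seq_scal_l.
  - now exists L.
Qed.

Lemma is_series_of_psum (a : nat -> C) (L : C) :
  filterlim (psum a) eventually (locally (T := C_R_CompleteNormedModule) L) ->
  is_series (V := C_R_NormedModule) a L.
Proof.
  intros H. unfold is_series.
  apply filterlim_ext with (fun N => psum a (S N)).
  - intros N. induction N; simpl.
    + rewrite sum_O. apply injective_projections; simpl; ring.
    + rewrite sum_Sn, <- IHN. reflexivity.
  - apply filterlim_locally. intros e.
    destruct (proj1 (filterlim_locally (psum a) L) H e) as [N HN].
    exists N. intros n Hn. apply HN. lia.
Qed.

(** * Separation of the kernel *)

(* Taylor coefficients of [(q - 1) / (q + 1) = -1 + 2 * sum_{n >= 1} (-1)^(n+1) q^n]. *)
Definition geom_coef (n : nat) : C :=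
  match n with O => RtoC (-1) | _ => RtoC (-2 * (-1) ^ n) end.

Lemma geom_remainder (q : C) M :
  (q + 1)%C <> RtoC 0 ->
  ((q - 1) / (q + 1) - psum (fun n => geom_coef n * q ^ n) (S M))%C
  = (-2 * (- q) ^ S M / (q + 1))%C.
Proof.
  intros Hq. induction M.
  - simpl. field. exact Hq.
  - change (psum (fun n => geom_coef n * q ^ n) (S (S M)))%C with
      (psum (fun n => geom_coef n * q ^ n) (S M) + geom_coef (S M) * q ^ S M)%C.
    replace ((q - 1) / (q + 1)
             - (psum (fun n => geom_coef n * q ^ n) (S M) + geom_coef (S M) * q ^ S M))%C
      with (((q - 1) / (q + 1) - psum (fun n => geom_coef n * q ^ n) (S M))
             - geom_coef (S M) * q ^ S M)%C
      by ring.
    rewrite IHM. unfold geom_coef. rewrite RtoC_mult, RtoC_pow.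
    replace (- q)%C with (RtoC (-1) * q)%C by ring. rewrite !Cpow_mult_l.
    simpl. field. exact Hq.
Qed.

Lemma geom_remainder_bound (q : C) lam N :
  Cmod q <= lam -> lam < 1 ->
  Cmod ((q - 1) / (q + 1) - psum (fun n => (geom_coef n * q ^ n)%C) N) <= 2 * lam ^ N / (1 - lam).
Proof.
  intros Hq Hl.
  assert (H0 : 0 <= lam) by (eapply Rle_trans; [apply Cmod_ge_0 | exact Hq]).
  assert (Hm : 1 - lam <= Cmod (q + 1)).
  { replace (q + 1)%C with (1 - - q)%C by ring. apply Cmod_1_minus_ge. now rewrite Cmod_opp. }
  assert (Hnz : (q + 1)%C <> RtoC 0) by (apply Cmod_neq_0; lra).
  unfold Rdiv. destruct N as [|M].
  - simpl. replace ((q - 1) / (q + 1) - 0)%C with ((q - 1) / (q + 1))%C by ring.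
    rewrite Cmod_div by exact Hnz. unfold Rdiv.
    apply Rmult_le_compat; [apply Cmod_ge_0 | left; apply Rinv_0_lt_compat; lra | |
                            apply Rinv_le_contravar; lra].
    unfold Cminus. eapply Rle_trans; [apply Cmod_triangle|]. rewrite Cmod_opp, Cmod_1. lra.
  - rewrite geom_remainder, Cmod_div by exact Hnz.
    rewrite Cmod_mult, Cmod_pow, Cmod_opp, Cmod_R, Rabs_left by lra.
    replace (- -2) with 2 by ring.
    unfold Rdiv. apply Rmult_le_compat.
    + apply Rmult_le_pos; [lra | apply pow_le, Cmod_ge_0].
    + left; apply Rinv_0_lt_compat; lra.
    + apply Rmult_le_compat_l; [lra|]. apply pow_incr. split; [apply Cmod_ge_0 | exact Hq].
    + apply Rinv_le_contravar; lra.
Qed.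

Definition kernel (v w : C) : C := (v - w) / (1 - v - w).

(* [(s - u) / (u + s)] is [(q - 1) / (q + 1)] with [q = s / u]. *)
Lemma kernel_centered (v w : C) :
  (v - RtoC (1/2) + (w - RtoC (1/2)))%C <> RtoC 0 ->
  kernel v w = ((w - RtoC (1/2) - (v - RtoC (1/2))) / (v - RtoC (1/2) + (w - RtoC (1/2))))%C.
Proof.
  intros H. unfold kernel.
  replace (1 - v - w)%C with (- (v - RtoC (1/2) + (w - RtoC (1/2))))%C
    by (apply injective_projections; simpl; field).
  field. exact H.
Qed.

Lemma centered_kernel_expansion (u s : C) lam N :
  u <> RtoC 0 -> Cmod s <= lam * Cmod u -> lam < 1 ->
  Cmod ((s - u) / (u + s) - psum (fun n => (geom_coef n / u ^ n * s ^ n)%C) N)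
  <= 2 * lam ^ N / (1 - lam).
Proof.
  intros Hu Hs Hl.
  assert (Hu0 : 0 < Cmod u) by (destruct (Cmod_ge_0 u) as [H|H]; [exact H|
    symmetry in H; apply Cmod_eq_0 in H; contradiction]).
  set (q := (s / u)%C).
  assert (Hq : Cmod q <= lam).
  { unfold q. rewrite Cmod_div by exact Hu. apply Rmult_le_reg_r with (Cmod u); [exact Hu0|].
    unfold Rdiv. rewrite Rmult_assoc, Rinv_l, Rmult_1_r by lra. exact Hs. }
  assert (Hq1 : (q + 1)%C <> RtoC 0).
  { apply Cmod_neq_0. pose proof (Cmod_1_minus_ge (- q) lam).
    replace (1 - - q)%C with (q + 1)%C in H by ring. rewrite Cmod_opp in H. specialize (H Hq).
    lra. }
  replace ((s - u) / (u + s))%C with ((q - 1) / (q + 1))%C.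
  - rewrite (psum_ext _ (fun n => geom_coef n * q ^ n)%C); [now apply geom_remainder_bound|].
    intros n _. unfold q, Cdiv. rewrite Cpow_mult_l, Cpow_inv by exact Hu. ring.
  - assert (Hus : (u + s)%C <> RtoC 0).
    { intros E. apply Hq1. unfold q.
      replace (s / u + 1)%C with ((u + s) / u)%C by (field; exact Hu).
      rewrite E. unfold Cdiv. apply Cmult_0_l. }
    unfold q. field. split; assumption.
Qed.

(* [vout] tells whether the [v]-circle is the outer one: the kernel is then
   expanded in powers of [(w - 1/2) / (v - 1/2)], otherwise of the inverse ratio. *)
Definition sep_v (vout : bool) (n : nat) (v : C) : C :=
  if vout then geom_coef n / (v - RtoC (1/2)) ^ n else - geom_coef n * (v - RtoC (1/2)) ^ n.

Definition sep_w (vout : bool) (n : nat) (w : C) : C :=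
  if vout then (w - RtoC (1/2)) ^ n else / (w - RtoC (1/2)) ^ n.

Definition radii_ordered (vout : bool) (R1 R2 : R) : Prop := if vout then R2 < R1 else R1 < R2.

Lemma radii_ordered_exists R1 R2 : R1 <> R2 -> exists vout, radii_ordered vout R1 R2.
Proof.
  intros H12.
  destruct (Rtotal_order R1 R2) as [H|[H|H]]; [exists false | contradiction | exists true];
    simpl; exact H.
Qed.

Definition sep_ratio (vout : bool) (R1 R2 : R) : R := if vout then R2 / R1 else R1 / R2.

Lemma sep_ratio_bounds vout R1 R2 :
  0 < R1 -> 0 < R2 -> radii_ordered vout R1 R2 -> 0 <= sep_ratio vout R1 R2 < 1.
Proof.
  intros H1 H2 Ho.
  assert (Hdiv : forall x y, 0 < x -> 0 < y -> y < x -> 0 <= y / x < 1).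
  { intros x y Hx Hy Hxy. split; [left; now apply Rdiv_lt_0_compat|].
    apply Rmult_lt_reg_r with x; [exact Hx|].
    unfold Rdiv. rewrite Rmult_assoc, Rinv_l, Rmult_1_r, Rmult_1_l; lra. }
  destruct vout; simpl in *; now apply Hdiv.
Qed.

Lemma circ_sub_center_neq_0 r th : 0 < r -> (circ r th - RtoC (1/2))%C <> RtoC 0.
Proof. intros Hr. apply Cmod_neq_0. rewrite Cmod_circ_sub_center; lra. Qed.

Lemma circ_centers_sum_neq_0 R1 R2 th ph :
  0 <= R1 -> 0 <= R2 -> R1 <> R2 ->
  (circ R1 th - RtoC (1/2) + (circ R2 ph - RtoC (1/2)))%C <> RtoC 0.
Proof. intros H1 H2 H12. apply Cplus_neq_0_Cmod. now rewrite !Cmod_circ_sub_center. Qed.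

Lemma kernel_separation_bound vout R1 R2 N th ph :
  0 < R1 -> 0 < R2 -> radii_ordered vout R1 R2 ->
  Cmod (kernel (circ R1 th) (circ R2 ph)
        - psum (fun n => (sep_v vout n (circ R1 th) * sep_w vout n (circ R2 ph))%C) N)
  <= 2 * sep_ratio vout R1 R2 ^ N / (1 - sep_ratio vout R1 R2).
Proof.
  intros H1 H2 Ho.
  assert (H12 : R1 <> R2) by (destruct vout; simpl in Ho; lra).
  rewrite kernel_centered by (apply circ_centers_sum_neq_0; lra).
  assert (Hu := Cmod_circ_sub_center R1 th ltac:(lra)).
  assert (Hs := Cmod_circ_sub_center R2 ph ltac:(lra)).
  set (u := (circ R1 th - RtoC (1/2))%C) in *. set (s := (circ R2 ph - RtoC (1/2))%C) in *.
  assert (Hl := sep_ratio_bounds vout R1 R2 H1 H2 Ho).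
  destruct vout; simpl in Ho, Hl |- *; fold u s.
  - apply centered_kernel_expansion; [apply Cmod_neq_0; lra | | lra].
    rewrite Hu, Hs. unfold Rdiv. rewrite Rmult_assoc, Rinv_l by lra. lra.
  - replace ((s - u) / (u + s) - psum (fun n => (- geom_coef n * u ^ n * / s ^ n)%C) N)%C
      with (- ((u - s) / (s + u) - psum (fun n => (geom_coef n / s ^ n * u ^ n)%C) N))%C.
    + rewrite Cmod_opp. apply centered_kernel_expansion; [apply Cmod_neq_0; lra | | lra].
      rewrite Hu, Hs. unfold Rdiv. rewrite Rmult_assoc, Rinv_l by lra. lra.
    + rewrite (psum_ext (fun n => (- geom_coef n * u ^ n * / s ^ n)%C)
                        (fun n => (- 1 * (geom_coef n / s ^ n * u ^ n))%C))
                          by (intros; unfold Cdiv; ring).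
      rewrite <- psum_mult_l.
      field. apply circ_centers_sum_neq_0; lra.
Qed.

Lemma holo_outside_sep_v rh vout n : 0 <= rh -> holo_outside rh (sep_v vout n).
Proof.
  intros Hrh. assert (Hc := holo_outside_pow rh _ n (holo_outside_sub_const rh (RtoC (1/2)))).
  destruct vout; simpl.
  - apply holo_outside_div; [apply holo_outside_const | exact Hc |].
    intros r th Hr. apply Cpow_nz, circ_sub_center_neq_0. lra.
  - apply holo_outside_mult; [apply holo_outside_const | exact Hc].
Qed.

Lemma holo_outside_sep_w rh vout n : 0 <= rh -> holo_outside rh (sep_w vout n).
Proof.
  intros Hrh. assert (Hc := holo_outside_pow rh _ n (holo_outside_sub_const rh (RtoC (1/2)))).
  destruct vout; simpl; [exact Hc|].
  apply holo_outside_inv; [exact Hc|].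
  intros r th Hr. apply Cpow_nz, circ_sub_center_neq_0. lra.
Qed.

Lemma Cmod_kernel_le R1 R2 th ph :
  0 < R1 -> 0 < R2 -> R1 <> R2 ->
  Cmod (kernel (circ R1 th) (circ R2 ph)) <= (R1 + R2) / Rabs (R1 - R2).
Proof.
  intros H1 H2 H12.
  rewrite kernel_centered by (apply circ_centers_sum_neq_0; lra).
  assert (Hu := Cmod_circ_sub_center R1 th ltac:(lra)).
  assert (Hs := Cmod_circ_sub_center R2 ph ltac:(lra)).
  assert (Hus := circ_centers_sum_neq_0 R1 R2 th ph ltac:(lra) ltac:(lra) H12).
  set (u := (circ R1 th - RtoC (1/2))%C) in *. set (s := (circ R2 ph - RtoC (1/2))%C) in *.
  rewrite Cmod_div by exact Hus.
  assert (A1 : Cmod (s - u) <= R1 + R2).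
  { unfold Cminus. eapply Rle_trans; [apply Cmod_triangle|]. rewrite Cmod_opp. lra. }
  assert (A2 : Rabs (R1 - R2) <= Cmod (u + s)).
  { assert (T1 := Cmod_triangle (u + s) (- s)). assert (T2 := Cmod_triangle (u + s) (- u)).
    replace (u + s + - s)%C with u in T1 by ring. replace (u + s + - u)%C with s in T2 by ring.
    rewrite Cmod_opp in T1, T2. apply Rabs_le. lra. }
  assert (A3 : 0 < Rabs (R1 - R2)) by (apply Rabs_pos_lt; lra).
  unfold Rdiv.
  apply Rmult_le_compat; [apply Cmod_ge_0 | left; apply Rinv_0_lt_compat; lra | exact A1 |].
  now apply Rinv_le_contravar.
Qed.

(** * The double contour integral *)

Definition double_integrand (R1 R2 : R) (a b : C -> C) (th ph : R) : C :=
  kernel (circ R1 th) (circ R2 ph) * circle_integrand a R1 th * circle_integrand b R2 ph.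

Definition double_int (R1 R2 : R) (a b : C -> C) : C :=
  RInt2 (double_integrand R1 R2 a b) 0 (2 * PI).

Lemma psum_circle_integrand_sep vout a b R1 R2 th ph N :
  psum (fun n => (circle_integrand (fun v => sep_v vout n v * a v) R1 th
                  * circle_integrand (fun w => sep_w vout n w * b w) R2 ph)%C) N
  = (psum (fun n => sep_v vout n (circ R1 th) * sep_w vout n (circ R2 ph)) N
     * circle_integrand a R1 th * circle_integrand b R2 ph)%C.
Proof. induction N; simpl; [ring|]. rewrite IHN. unfold circle_integrand. ring. Qed.

Lemma is_lim_seq_geom_mult (lam K : R) :
  0 <= lam < 1 -> is_lim_seq (fun N => 2 * lam ^ N / (1 - lam) * K) 0.
Proof.
  intros Hl.
  apply is_lim_seq_ext with (fun N => lam ^ N * (2 / (1 - lam) * K)); [intros; unfold Rdiv; ring|].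
  replace (Finite 0) with (Rbar_mult 0 (2 / (1 - lam) * K)) by (simpl; f_equal; ring).
  apply is_lim_seq_scal_r, is_lim_seq_geom. rewrite Rabs_pos_eq; lra.
Qed.

Lemma filterlim_C_R_unique (u : nat -> C) (L1 L2 : C) :
  filterlim u eventually (locally (T := C_R_CompleteNormedModule) L1) ->
  filterlim u eventually (locally (T := C_R_CompleteNormedModule) L2) -> L1 = L2.
Proof.
  intros H1 H2.
  exact (filterlim_locally_unique (K := R_AbsRing) (V := C_R_NormedModule) (F := eventually)
           u L1 L2 H1 H2).
Qed.

Section DoubleIntegral.
Variable rh : R.
Hypothesis Hrh : 0 <= rh.

Lemma is_RInt2_double_integrand_sep a b R1 R2 vout :
  holo_outside rh a -> holo_outside rh b -> rh < R1 -> rh < R2 -> radii_ordered vout R1 R2 ->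
  exists L : C,
    filterlim (fun N => psum (fun n => (circle_int R1 (fun v => sep_v vout n v * a v)
                                      * circle_int R2 (fun w => sep_w vout n w * b w))%C) N)
      eventually (locally (T := C_R_CompleteNormedModule) L) /\
    is_RInt2 (double_integrand R1 R2 a b) 0 (2 * PI) L.
Proof.
  intros Ha Hb H1 H2 Ho. pose proof PI_RGT_0.
  destruct (holo_outside_bounded_on_circle rh a Ha R1 H1) as [Ma [Ma0 HMa]].
  destruct (holo_outside_bounded_on_circle rh b Hb R2 H2) as [Mb [Mb0 HMb]].
  assert (Hl := sep_ratio_bounds vout R1 R2 ltac:(lra) ltac:(lra) Ho).
  apply (is_RInt2_uniform_limit
    (fun N th ph => psum (fun n => (circle_integrand (fun v => sep_v vout n v * a v) R1 th
                                   * circle_integrand (fun w => sep_w vout n w * b w) R2 ph)%C) N)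
    _ _ (fun N => 2 * sep_ratio vout R1 R2 ^ N / (1 - sep_ratio vout R1 R2)
                    * ((Ma * R1) * (Mb * R2)))).
  - lra.
  - intros N. apply is_RInt2_psum; [lra|]. intros n _.
    apply is_RInt2_prod; apply is_RInt_circle_int with rh; auto;
      apply holo_outside_mult; auto using holo_outside_sep_v, holo_outside_sep_w.
  - intros N th ph Hth Hph. rewrite psum_circle_integrand_sep. unfold double_integrand.
    set (P := psum _ N). set (K := kernel _ _).
    set (A := circle_integrand a R1 th). set (B := circle_integrand b R2 ph).
    replace (P * A * B - K * A * B)%C with (- ((K - P) * A * B))%C by ring.
    unfold A, B. rewrite Cmod_opp, !Cmod_mult, !Cmod_circle_integrand by lra.
    assert (Ha0 := Cmod_ge_0 (a (circ R1 th))). assert (Hb0 := Cmod_ge_0 (b (circ R2 ph))).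
    set (q := sep_ratio vout R1 R2) in *.
    replace (2 * q ^ N / (1 - q) * (Ma * R1 * (Mb * R2)))
      with (2 * q ^ N / (1 - q) * (Ma * R1) * (Mb * R2)) by ring.
    assert (HaR : 0 <= Cmod (a (circ R1 th)) * R1) by (apply Rmult_le_pos; lra).
    assert (HbR : 0 <= Cmod (b (circ R2 ph)) * R2) by (apply Rmult_le_pos; lra).
    apply Rmult_le_compat; [apply Rmult_le_pos; [apply Cmod_ge_0 | exact HaR] | exact HbR | |
                            apply Rmult_le_compat_r; [lra | now apply HMb]].
    apply Rmult_le_compat; [apply Cmod_ge_0 | exact HaR | |
                            apply Rmult_le_compat_r; [lra | now apply HMa]].
    apply kernel_separation_bound; [lra | lra | exact Ho].
  - apply is_lim_seq_geom_mult, Hl.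
Qed.

Lemma is_RInt2_double_integrand a b R1 R2 :
  holo_outside rh a -> holo_outside rh b -> rh < R1 -> rh < R2 -> R1 <> R2 ->
  is_RInt2 (double_integrand R1 R2 a b) 0 (2 * PI) (double_int R1 R2 a b).
Proof.
  intros Ha Hb H1 H2 H12. destruct (radii_ordered_exists R1 R2 H12) as [vout Ho].
  destruct (is_RInt2_double_integrand_sep a b R1 R2 vout Ha Hb H1 H2 Ho) as [L [_ HL]].
  unfold double_int. now rewrite (RInt2_unique _ _ _ _ HL).
Qed.

Lemma double_int_radius_indep a b vout R1 R2 R1' R2' :
  holo_outside rh a -> holo_outside rh b ->
  rh < R1 -> rh < R2 -> rh < R1' -> rh < R2' ->
  radii_ordered vout R1 R2 -> radii_ordered vout R1' R2' ->
  double_int R1 R2 a b = double_int R1' R2' a b.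
Proof.
  intros Ha Hb H1 H2 H1' H2' Ho Ho'.
  destruct (is_RInt2_double_integrand_sep a b R1 R2 vout Ha Hb H1 H2 Ho) as [L [HL HI]].
  destruct (is_RInt2_double_integrand_sep a b R1' R2' vout Ha Hb H1' H2' Ho') as [L' [HL' HI']].
  transitivity L; [exact (RInt2_unique _ _ _ _ HI)|].
  transitivity L'; [|symmetry; exact (RInt2_unique _ _ _ _ HI')].
  apply (filterlim_C_R_unique _ L L' HL).
  eapply filterlim_ext; [|exact HL']. intros N. apply psum_ext. intros n _.
  assert (Hv : holo_outside rh (fun v => (sep_v vout n v * a v)%C))
    by (apply holo_outside_mult; auto using holo_outside_sep_v).
  assert (Hw : holo_outside rh (fun w => (sep_w vout n w * b w)%C))
    by (apply holo_outside_mult; auto using holo_outside_sep_w).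
  now rewrite (circle_int_radius_indep rh _ Hv R1 R1'), (circle_int_radius_indep rh _ Hw R2 R2').
Qed.

End DoubleIntegral.

Lemma holo_outside_psum rh (c : nat -> C) (A : nat -> C -> C) M :
  (forall m, holo_outside rh (A m)) -> holo_outside rh (fun v => psum (fun m => (c m * A m v)%C) M).
Proof.
  intros HA. induction M as [|M IH]; simpl; [apply holo_outside_const|].
  apply holo_outside_plus; [exact IH|].
  apply holo_outside_mult; [apply holo_outside_const | apply HA].
Qed.

Section DoubleIntegralLimits.
Variables (rh R1 R2 : R).
Hypotheses (Hrh : 0 <= rh) (H1 : rh < R1) (H2 : rh < R2) (H12 : R1 <> R2).

Lemma double_int_cvg (aM bM : nat -> C -> C) (a b : C -> C) (d : nat -> R) :
  (forall M, holo_outside rh (aM M)) -> (forall M, holo_outside rh (bM M)) ->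
  holo_outside rh a -> holo_outside rh b ->
  (forall M th ph, 0 <= th <= 2 * PI -> 0 <= ph <= 2 * PI ->
     Cmod (aM M (circ R1 th) * bM M (circ R2 ph) - a (circ R1 th) * b (circ R2 ph)) <= d M) ->
  is_lim_seq d 0 ->
  filterlim (fun M => double_int R1 R2 (aM M) (bM M)) eventually
    (locally (T := C_R_CompleteNormedModule) (double_int R1 R2 a b)).
Proof.
  intros HaM HbM Ha Hb Hd Hlim. pose proof PI_RGT_0.
  set (K := (R1 + R2) / Rabs (R1 - R2) * R1 * R2).
  destruct (is_RInt2_uniform_limit (fun M => double_integrand R1 R2 (aM M) (bM M))
              (double_integrand R1 R2 a b) (fun M => double_int R1 R2 (aM M) (bM M))
              (fun M => K * d M) 0 (2 * PI)) as [L [HL HI]].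
  - lra.
  - intros M. apply is_RInt2_double_integrand with rh;
      [exact Hrh | apply HaM | apply HbM | exact H1 | exact H2 | exact H12].
  - intros M th ph Hth Hph. unfold double_integrand, circle_integrand.
    set (k := kernel _ _). set (J1 := circ_jac R1 th). set (J2 := circ_jac R2 ph).
    set (D := (aM M (circ R1 th) * bM M (circ R2 ph) - a (circ R1 th) * b (circ R2 ph))%C).
    replace (k * (aM M (circ R1 th) * J1) * (bM M (circ R2 ph) * J2)
             - k * (a (circ R1 th) * J1) * (b (circ R2 ph) * J2))%C with (k * J1 * J2 * D)%C
      by (unfold D; ring).
    unfold J1, J2. rewrite !Cmod_mult, !Cmod_circ_jac by lra.
    apply Rmult_le_compat; [| apply Cmod_ge_0 | | now apply Hd].
    + apply Rmult_le_pos; [apply Rmult_le_pos; [apply Cmod_ge_0|] |]; lra.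
    + apply Rmult_le_compat_r; [lra|]. apply Rmult_le_compat_r; [lra|].
      apply Cmod_kernel_le; lra.
  - replace (Finite 0) with (Rbar_mult K 0) by (simpl; f_equal; ring).
    now apply is_lim_seq_scal_l.
  - unfold double_int at 2. now rewrite (RInt2_unique _ _ _ _ HI).
Qed.

Lemma double_int_psum_l (A : nat -> C -> C) (c : nat -> C) b M :
  (forall m, holo_outside rh (A m)) -> holo_outside rh b ->
  psum (fun m => (c m * double_int R1 R2 (A m) b)%C) M
  = double_int R1 R2 (fun v => psum (fun m => (c m * A m v)%C) M) b.
Proof.
  intros HA Hb. pose proof PI_RGT_0. symmetry. apply RInt2_unique.
  apply is_RInt2_ext
    with (fun th ph => psum (fun m => (c m * double_integrand R1 R2 (A m) b th ph)%C) M).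
  - lra.
  - intros th ph _ _. induction M as [|M IH]; simpl; unfold double_integrand, circle_integrand in *;
      [ring|]. rewrite IH. simpl. ring.
  - apply is_RInt2_psum; [lra|]. intros m _. apply is_RInt2_scal; [lra|].
    apply is_RInt2_double_integrand with rh;
      [exact Hrh | apply HA | exact Hb | exact H1 | exact H2 | exact H12].
Qed.

Lemma double_int_psum_r (B : nat -> C -> C) (c : nat -> C) a M :
  holo_outside rh a -> (forall m, holo_outside rh (B m)) ->
  psum (fun m => (c m * double_int R1 R2 a (B m))%C) M
  = double_int R1 R2 a (fun w => psum (fun m => (c m * B m w)%C) M).
Proof.
  intros Ha HB. pose proof PI_RGT_0. symmetry. apply RInt2_unique.
  apply is_RInt2_ext
    with (fun th ph => psum (fun m => (c m * double_integrand R1 R2 a (B m) th ph)%C) M).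
  - lra.
  - intros th ph _ _. induction M as [|M IH]; simpl; unfold double_integrand, circle_integrand in *;
      [ring|]. rewrite IH. simpl. ring.
  - apply is_RInt2_psum; [lra|]. intros m _. apply is_RInt2_scal; [lra|].
    apply is_RInt2_double_integrand with rh;
      [exact Hrh | exact Ha | apply HB | exact H1 | exact H2 | exact H12].
Qed.

Lemma double_int_series_l (A : nat -> C -> C) (c : nat -> C) (Astar b : C -> C) (d : nat -> R) :
  (forall m, holo_outside rh (A m)) -> holo_outside rh Astar -> holo_outside rh b ->
  (forall M th, 0 <= th <= 2 * PI ->
     Cmod (psum (fun m => (c m * A m (circ R1 th))%C) M - Astar (circ R1 th)) <= d M) ->
  is_lim_seq d 0 ->
  filterlim (fun M => psum (fun m => (c m * double_int R1 R2 (A m) b)%C) M) eventually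
    (locally (T := C_R_CompleteNormedModule) (double_int R1 R2 Astar b)).
Proof.
  intros HA HAs Hb Hd Hlim.
  destruct (holo_outside_bounded_on_circle rh b Hb R2 H2) as [Mb [Mb0 HMb]].
  apply filterlim_ext
    with (fun M => double_int R1 R2 (fun v => psum (fun m => (c m * A m v)%C) M) b).
  { intros M. symmetry. now apply double_int_psum_l. }
  apply double_int_cvg with (fun M => d M * Mb).
  - intros M. now apply holo_outside_psum.
  - intros _. exact Hb.
  - exact HAs.
  - exact Hb.
  - intros M th ph Hth Hph.
    replace (psum (fun m => (c m * A m (circ R1 th))%C) M * b (circ R2 ph)
             - Astar (circ R1 th) * b (circ R2 ph))%C
      with ((psum (fun m => (c m * A m (circ R1 th))%C) M - Astar (circ R1 th)) * b (circ R2 ph))%C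
      by ring.
    rewrite Cmod_mult.
    apply Rmult_le_compat; [apply Cmod_ge_0 | apply Cmod_ge_0 | now apply Hd | now apply HMb].
  - replace (Finite 0) with (Rbar_mult 0 Mb) by (simpl; f_equal; ring).
    now apply is_lim_seq_scal_r.
Qed.

Lemma double_int_series_r (B : nat -> C -> C) (c : nat -> C) (Bstar a : C -> C) (d : nat -> R) :
  (forall m, holo_outside rh (B m)) -> holo_outside rh Bstar -> holo_outside rh a ->
  (forall M ph, 0 <= ph <= 2 * PI ->
     Cmod (psum (fun m => (c m * B m (circ R2 ph))%C) M - Bstar (circ R2 ph)) <= d M) ->
  is_lim_seq d 0 ->
  filterlim (fun M => psum (fun m => (c m * double_int R1 R2 a (B m))%C) M) eventually
    (locally (T := C_R_CompleteNormedModule) (double_int R1 R2 a Bstar)).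
Proof.
  intros HB HBs Ha Hd Hlim.
  destruct (holo_outside_bounded_on_circle rh a Ha R1 H1) as [Ma [Ma0 HMa]].
  apply filterlim_ext
    with (fun M => double_int R1 R2 a (fun w => psum (fun m => (c m * B m w)%C) M)).
  { intros M. symmetry. now apply double_int_psum_r. }
  apply double_int_cvg with (fun M => Ma * d M).
  - intros _. exact Ha.
  - intros M. now apply holo_outside_psum.
  - exact Ha.
  - exact HBs.
  - intros M th ph Hth Hph.
    replace (a (circ R1 th) * psum (fun m => (c m * B m (circ R2 ph))%C) M
             - a (circ R1 th) * Bstar (circ R2 ph))%C
      with (a (circ R1 th) * (psum (fun m => (c m * B m (circ R2 ph))%C) M - Bstar (circ R2 ph)))%C
      by ring.
    rewrite Cmod_mult.
    apply Rmult_le_compat; [apply Cmod_ge_0 | apply Cmod_ge_0 | now apply HMa | now apply Hd].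
  - replace (Finite 0) with (Rbar_mult Ma 0) by (simpl; f_equal; ring).
    now apply is_lim_seq_scal_l.
Qed.

End DoubleIntegralLimits.

(** * The negative binomial series *)

Fixpoint psum_R (f : nat -> R) (N : nat) : R :=
  match N with O => 0 | S N => psum_R f N + f N end.

Lemma RtoC_psum_R f N : RtoC (psum_R f N) = psum (fun n => RtoC (f n)) N.
Proof. induction N; simpl; [reflexivity|]. now rewrite RtoC_plus, IHN. Qed.

(* [nb_coef j m] is the coefficient of [z^m] in [(1 - z)^-(j+1)]. *)
Definition nb_coef (j m : nat) : R := Binomial.C (m + j) m.

Lemma nb_coef_0_r j : nb_coef j 0 = 1.
Proof. unfold nb_coef, Binomial.C. rewrite Nat.sub_0_r. simpl. field. apply INR_fact_neq_0. Qed.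

Lemma nb_coef_0_l m : nb_coef 0 m = 1.
Proof.
  unfold nb_coef, Binomial.C. rewrite Nat.add_0_r, Nat.sub_diag. simpl. field. apply INR_fact_neq_0.
Qed.

Lemma nb_coef_ge_0 j m : 0 <= nb_coef j m.
Proof.
  unfold nb_coef, Binomial.C. left. apply Rdiv_lt_0_compat; [apply INR_fact_lt_0|].
  apply Rmult_lt_0_compat; apply INR_fact_lt_0.
Qed.

Lemma nb_coef_pascal j m : nb_coef (S j) (S m) = nb_coef j (S m) + nb_coef (S j) m.
Proof.
  unfold nb_coef.
  replace (S m + j)%nat with (m + S j)%nat by lia.
  replace (S m + S j)%nat with (S (m + S j)) by lia.
  rewrite <- (pascal (m + S j) m) by lia. ring.
Qed.

Lemma Theta_nb_coef j m : Theta (S j) (S m) = nb_coef j m.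
Proof. unfold Theta, nb_coef. f_equal; lia. Qed.

Definition nb_sum (j M : nat) (z : C) : C := psum (fun m => (nb_coef j m * z ^ m)%C) M.

Definition nb_sum_R (j M : nat) (lam : R) : R := psum_R (fun m => nb_coef j m * lam ^ m) M.

Lemma nb_sum_RtoC j M lam : nb_sum j M (RtoC lam) = RtoC (nb_sum_R j M lam).
Proof.
  unfold nb_sum, nb_sum_R. rewrite RtoC_psum_R. apply psum_ext. intros m _.
  now rewrite RtoC_mult, RtoC_pow.
Qed.

Lemma nb_sum_0 M z : ((1 - z) * nb_sum 0 M z)%C = (1 - z ^ M)%C.
Proof.
  induction M; unfold nb_sum in *; simpl; [ring|].
  rewrite nb_coef_0_l. rewrite Cmult_plus_distr_l, IHM. ring.
Qed.

Lemma nb_sum_R_0 M lam : (1 - lam) * nb_sum_R 0 M lam = 1 - lam ^ M.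
Proof.
  apply RtoC_inj. rewrite RtoC_mult, !RtoC_minus, <- nb_sum_RtoC, RtoC_pow. apply nb_sum_0.
Qed.

Lemma nb_sum_shift j M z :
  ((1 - z) * nb_sum (S j) (S M) z)%C = (nb_sum j (S M) z - z * (nb_coef (S j) M * z ^ M))%C.
Proof.
  assert (Hrec : nb_sum (S j) (S M) z = (nb_sum j (S M) z + z * nb_sum (S j) M z)%C).
  { induction M.
    - unfold nb_sum; simpl. rewrite !nb_coef_0_r. ring.
    - unfold nb_sum in *. change (psum (fun m => (nb_coef (S j) m * z ^ m)%C) (S (S M)))
        with (psum (fun m => (nb_coef (S j) m * z ^ m)%C) (S M) + nb_coef (S j) (S M) * z ^ S M)%C.
      rewrite IHM at 1. rewrite nb_coef_pascal. simpl. rewrite RtoC_plus. ring. }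
  assert (HS : nb_sum (S j) (S M) z = (nb_sum (S j) M z + nb_coef (S j) M * z ^ M)%C)
    by reflexivity.
  assert (HT : nb_sum j (S M) z
               = (nb_sum (S j) M z + nb_coef (S j) M * z ^ M - z * nb_sum (S j) M z)%C)
    by (rewrite <- HS, Hrec; ring).
  rewrite HS, HT. ring.
Qed.

Lemma nb_sum_R_shift j M lam :
  (1 - lam) * nb_sum_R (S j) (S M) lam = nb_sum_R j (S M) lam - lam * (nb_coef (S j) M * lam ^ M).
Proof.
  apply RtoC_inj. rewrite RtoC_mult, !RtoC_minus, !RtoC_mult, <- !nb_sum_RtoC, RtoC_pow.
  apply nb_sum_shift.
Qed.

Definition nb_tail (j M : nat) (lam : R) : R := / (1 - lam) ^ S j - nb_sum_R j M lam.

Lemma nb_tail_0 M lam : lam < 1 -> nb_tail 0 M lam = lam ^ M / (1 - lam).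
Proof.
  intros Hl. unfold nb_tail. apply Rmult_eq_reg_l with (1 - lam); [|lra].
  rewrite Rmult_minus_distr_l, nb_sum_R_0. field. lra.
Qed.

Lemma nb_tail_shift j M lam :
  lam < 1 ->
  (1 - lam) * nb_tail (S j) (S M) lam = nb_tail j (S M) lam + lam * (nb_coef (S j) M * lam ^ M).
Proof.
  intros Hl. unfold nb_tail. rewrite Rmult_minus_distr_l, nb_sum_R_shift.
  assert ((1 - lam) ^ j <> 0) by (apply pow_nonzero; lra).
  simpl. field. split; [assumption | lra].
Qed.

Lemma nb_remainder_shift j M (z : C) :
  (1 - z)%C <> RtoC 0 ->
  ((1 - z) * (nb_sum (S j) (S M) z - / (1 - z) ^ S (S j)))%C
  = (nb_sum j (S M) z - / (1 - z) ^ S j - z * (nb_coef (S j) M * z ^ M))%C.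
Proof.
  intros Hw.
  transitivity ((1 - z) * nb_sum (S j) (S M) z - (1 - z) * / (1 - z) ^ S (S j))%C; [ring|].
  rewrite nb_sum_shift.
  assert (Hp : ((1 - z) ^ j)%C <> RtoC 0) by now apply Cpow_nz.
  simpl. field. now split.
Qed.

Lemma nb_sum_remainder_bound j : forall M (z : C) lam,
  0 <= lam < 1 -> Cmod z <= lam ->
  Cmod (nb_sum j M z - / (1 - z) ^ S j) <= nb_tail j M lam.
Proof.
  induction j as [|j IH]; intros M z lam Hl Hz;
    assert (Hw := Cmod_1_minus_ge z lam Hz);
    assert (Hw0 : (1 - z)%C <> RtoC 0) by (apply Cmod_neq_0; lra).
  - rewrite nb_tail_0 by lra.
    replace (nb_sum 0 M z - / (1 - z) ^ 1)%C with (- (z ^ M / (1 - z)))%C.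
    + rewrite Cmod_opp, Cmod_div, Cmod_pow by exact Hw0. unfold Rdiv.
      apply Rmult_le_compat; [apply pow_le, Cmod_ge_0 | left; apply Rinv_0_lt_compat; lra | |].
      * apply pow_incr. split; [apply Cmod_ge_0 | exact Hz].
      * apply Rinv_le_contravar; lra.
    + assert (H0 := nb_sum_0 M z).
      replace (nb_sum 0 M z) with ((1 - z ^ M) / (1 - z))%C by (rewrite <- H0; field; exact Hw0).
      simpl. field. exact Hw0.
  - destruct M as [|M].
    + unfold nb_tail, nb_sum, nb_sum_R; simpl psum; simpl psum_R.
      replace (0 - / (1 - z) ^ S (S j))%C with (- / (1 - z) ^ S (S j))%C by ring.
      rewrite Rminus_0_r, Cmod_opp, Cmod_inv by now apply Cpow_nz.
      rewrite Cmod_pow. apply Rinv_le_contravar; [apply pow_lt; lra|].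
      apply pow_incr. lra.
    + assert (Hm := Cmod_mult (1 - z) (nb_sum (S j) (S M) z - / (1 - z) ^ S (S j))).
      rewrite nb_remainder_shift in Hm by exact Hw0.
      assert (Hstep : Cmod (nb_sum j (S M) z - / (1 - z) ^ S j - z * (nb_coef (S j) M * z ^ M))
                      <= (1 - lam) * nb_tail (S j) (S M) lam).
      { rewrite nb_tail_shift by lra. unfold Cminus at 1.
        eapply Rle_trans; [apply Cmod_triangle|]. apply Rplus_le_compat; [now apply IH|].
        rewrite Cmod_opp, !Cmod_mult, Cmod_pow, Cmod_R, Rabs_pos_eq by apply nb_coef_ge_0.
        apply Rmult_le_compat; [apply Cmod_ge_0 | | exact Hz |].
        - apply Rmult_le_pos; [apply nb_coef_ge_0 | apply pow_le, Cmod_ge_0].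
        - apply Rmult_le_compat_l; [apply nb_coef_ge_0|].
          apply pow_incr. split; [apply Cmod_ge_0 | exact Hz]. }
      assert (HE := Cmod_ge_0 (nb_sum (S j) (S M) z - / (1 - z) ^ S (S j))).
      assert (Ht : 0 <= nb_tail (S j) (S M) lam).
      { apply Rmult_le_reg_l with (1 - lam); [lra|]. rewrite Rmult_0_r. nra. }
      apply Rmult_le_reg_l with (1 - lam); [lra|]. nra.
Qed.

Lemma nb_tail_ge_0 j M lam : 0 <= lam < 1 -> 0 <= nb_tail j M lam.
Proof.
  intros Hl. eapply Rle_trans; [apply Cmod_ge_0|].
  apply (nb_sum_remainder_bound j M (RtoC lam)); [exact Hl|].
  rewrite Cmod_R, Rabs_pos_eq; lra.
Qed.

(* The partial sums increase and are bounded, so their increments tend to zero;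
   [nb_tail_shift] then propagates convergence from [j] to [S j]. *)
Lemma is_lim_seq_nb_tail j lam : 0 <= lam < 1 -> is_lim_seq (fun M => nb_tail j M lam) 0.
Proof.
  intros Hl. induction j as [|j IH].
  - apply is_lim_seq_ext with (fun M => lam ^ M * / (1 - lam)).
    { intros M. rewrite nb_tail_0 by lra. reflexivity. }
    replace (Finite 0) with (Rbar_mult 0 (/ (1 - lam))) by (simpl; f_equal; ring).
    apply is_lim_seq_scal_r, is_lim_seq_geom. rewrite Rabs_pos_eq; lra.
  - destruct (growing_cv (fun M => nb_sum_R (S j) M lam)) as [l Hcv].
    { intros M. unfold nb_sum_R. simpl.
      assert (0 <= nb_coef (S j) M * lam ^ M)
        by (apply Rmult_le_pos; [apply nb_coef_ge_0 | apply pow_le; lra]).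
      lra. }
    { exists (/ (1 - lam) ^ S (S j)). intros x [M ->].
      pose proof (nb_tail_ge_0 (S j) M lam Hl). unfold nb_tail in *. lra. }
    apply is_lim_seq_Reals in Hcv.
    assert (Hterm : is_lim_seq (fun M => nb_coef (S j) M * lam ^ M) 0).
    { apply is_lim_seq_ext with (fun M => nb_sum_R (S j) (S M) lam - nb_sum_R (S j) M lam);
        [intros M; unfold nb_sum_R; simpl; ring|].
      replace (Finite 0) with (Rbar_minus l l) by (simpl; f_equal; ring).
      apply is_lim_seq_minus'; [apply (is_lim_seq_incr_1 (fun M => nb_sum_R (S j) M lam)) |];
        exact Hcv. }
    apply is_lim_seq_incr_1.
    apply is_lim_seq_ext with
      (fun M => (nb_tail j (S M) lam + lam * (nb_coef (S j) M * lam ^ M)) * / (1 - lam)).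
    { intros M. rewrite <- nb_tail_shift by lra. field. lra. }
    replace (Finite 0) with (Rbar_mult (0 + lam * 0) (/ (1 - lam))) by (simpl; f_equal; ring).
    apply is_lim_seq_scal_r, is_lim_seq_plus'.
    + apply (is_lim_seq_incr_1 (fun M => nb_tail j M lam)). exact IH.
    + pose proof (is_lim_seq_scal_l _ lam 0 Hterm) as H. simpl in H. exact H.
Qed.

(** * The contour integrals Q *)

Lemma Czpow_of_nat (v : C) n : Czpow v (Z.of_nat n) = (v ^ n)%C.
Proof. destruct n as [|n]; [reflexivity|]. simpl. now rewrite SuccNat2Pos.id_succ. Qed.

Lemma Czpow_1_sub_succ (v : C) m : v <> RtoC 0 -> Czpow v (1 - Z.of_nat (S m)) = ((/ v) ^ m)%C.
Proof.
  intros Hv. replace (1 - Z.of_nat (S m))%Z with (- Z.of_nat m)%Z by lia.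
  destruct m as [|m]; [reflexivity|].
  rewrite Cpow_inv by exact Hv. simpl. now rewrite SuccNat2Pos.id_succ.
Qed.

Section GfacShifts.
Variables (alpha t : R) (v : C).
Hypotheses (Hv0 : v <> RtoC 0) (Hv1 : (v - 1)%C <> RtoC 0) (Hva : (v - alpha)%C <> RtoC 0).

Lemma Gfac_shift_x m : Gfac alpha t 1 (Z.of_nat (S m)) v = ((/ v) ^ m * Gfac alpha t 1 1 v)%C.
Proof.
  unfold Gfac. rewrite Czpow_1_sub_succ by exact Hv0.
  replace (1 - 1)%Z with 0%Z by lia. simpl. field. now split.
Qed.

Lemma Gfac_shift_k j :
  Gfac alpha t (Z.of_nat (j + 1)) 1 v = (/ (1 - / v) ^ j * Gfac alpha t 1 1 v)%C.
Proof.
  unfold Gfac. replace (Z.of_nat (j + 1) - 1)%Z with (Z.of_nat j) by lia.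
  rewrite !Czpow_of_nat. replace (1 - 1)%Z with 0%Z by lia.
  replace (j + 1)%nat with (S j) by lia. simpl.
  replace (1 - / v)%C with ((v - 1) / v)%C by (field; exact Hv0).
  unfold Cdiv. rewrite Cpow_mult_l, Cpow_inv by exact Hv0.
  field. repeat split; try assumption; now apply Cpow_nz.
Qed.

End GfacShifts.

Lemma Cmod_circ_ge r th : 0 <= r -> r - 1/2 <= Cmod (circ r th).
Proof.
  intros Hr. assert (T := Cmod_triangle (circ r th) (- RtoC (1/2))).
  change (circ r th + - RtoC (1/2))%C with (circ r th - RtoC (1/2))%C in T.
  rewrite Cmod_circ_sub_center, Cmod_opp, Cmod_R, Rabs_pos_eq in T; lra.
Qed.

(* On a circle of radius [r > 3/2] we have [|1/v| <= 1/(r - 1/2) < 1], and the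
   series is the negative binomial series of [(1 - 1/v)^-(j+1)] in [1/v]. *)
Lemma Gfac_series_uniform alpha t j r :
  rho alpha < r -> 3/2 < r ->
  exists d : nat -> R, is_lim_seq d 0 /\
    forall M th, 0 <= th <= 2 * PI ->
      Cmod (psum (fun m => (RtoC (Theta (S j) (S m))
                            * Gfac alpha t 1 (Z.of_nat (S m)) (circ r th))%C) M
            - Gfac alpha t (Z.of_nat (S j + 1)) 1 (circ r th)) <= d M.
Proof.
  intros Hr Hr3.
  destruct (holo_outside_bounded_on_circle (rho alpha) (Gfac alpha t 1 1)
              (holo_outside_Gfac alpha t 1 1) r Hr)
    as [ME [ME0 HME]].
  set (lam := / (r - 1/2)).
  assert (Hl : 0 <= lam < 1).
  { unfold lam. split; [left; apply Rinv_0_lt_compat; lra|].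
    rewrite <- Rinv_1. apply Rinv_lt_contravar; lra. }
  exists (fun M => nb_tail j M lam * ME). split.
  - replace (Finite 0) with (Rbar_mult 0 ME) by (simpl; f_equal; ring).
    now apply is_lim_seq_scal_r, is_lim_seq_nb_tail.
  - intros M th Hth. destruct (circ_avoids_poles alpha r th Hr) as (H0 & H1 & Ha).
    set (v := circ r th) in *.
    rewrite (psum_ext _ (fun m => (nb_coef j m * (/ v) ^ m * Gfac alpha t 1 1 v)%C))
      by (intros m _; rewrite Theta_nb_coef, Gfac_shift_x by assumption; ring).
    rewrite <- psum_mult_r, Gfac_shift_k by assumption.
    replace (psum (fun m => (nb_coef j m * (/ v) ^ m)%C) M * Gfac alpha t 1 1 v
             - / (1 - / v) ^ S j * Gfac alpha t 1 1 v)%C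
      with ((nb_sum j M (/ v) - / (1 - / v) ^ S j) * Gfac alpha t 1 1 v)%C
      by (unfold nb_sum; ring).
    rewrite Cmod_mult. apply Rmult_le_compat; [apply Cmod_ge_0 | apply Cmod_ge_0 | | now apply HME].
    apply nb_sum_remainder_bound; [exact Hl|].
    rewrite Cmod_inv by exact H0. apply Rinv_le_contravar; [lra|].
    apply Cmod_circ_ge. lra.
Qed.

Lemma Q_double_int R1 R2 alpha t k l x y :
  Q R1 R2 alpha t k l x y
  = (RtoC (alpha ^ 2 / (2 * PI) ^ 2) * double_int R1 R2 (Gfac alpha t l y) (Gfac alpha t k x))%C.
Proof.
  unfold Q, double_int, RInt2. apply f_equal.
  apply (RInt_ext (V := C_R_CompleteNormedModule)). intros th _.
  apply (RInt_ext (V := C_R_CompleteNormedModule)). intros ph _.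
  unfold Qintegrand, double_integrand, circle_integrand, kernel.
  match goal with |- ?a = ?b => change (@eq C a b) end. ring.
Qed.

Lemma Q_radius_shift R1 R2 alpha t k l x y :
  rho alpha < R1 -> rho alpha < R2 -> R1 <> R2 ->
  Q R1 R2 alpha t k l x y = Q (R1 + 2) (R2 + 2) alpha t k l x y.
Proof.
  intros H1 H2 H12. pose proof (rho_ge_half alpha).
  assert (Hrh : 0 <= rho alpha) by lra.
  destruct (radii_ordered_exists R1 R2 H12) as [vout Ho].
  assert (Ho' : radii_ordered vout (R1 + 2) (R2 + 2)) by (destruct vout; simpl in *; lra).
  rewrite !Q_double_int.
  rewrite (double_int_radius_indep (rho alpha) Hrh _ _ vout R1 R2 (R1 + 2) (R2 + 2)
             (holo_outside_Gfac _ _ _ _) (holo_outside_Gfac _ _ _ _)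
             H1 H2 ltac:(lra) ltac:(lra) Ho Ho').
  reflexivity.
Qed.

Lemma is_series_Q_y alpha t R1 R2 j k x :
  rho alpha < R1 -> rho alpha < R2 -> R1 <> R2 ->
  is_series (V := C_R_NormedModule)
    (fun m => (RtoC (Theta (S j) (S m)) * Q R1 R2 alpha t k 1 x (Z.of_nat (S m)))%C)
    (Q R1 R2 alpha t k (Z.of_nat (S j + 1)) x 1).
Proof.
  intros H1 H2 H12. pose proof (rho_ge_half alpha).
  set (c := RtoC (alpha ^ 2 / (2 * PI) ^ 2)).
  apply is_series_ext with
    (fun m => (c * (RtoC (Theta (S j) (S m))
                    * double_int (R1 + 2) (R2 + 2)
                        (Gfac alpha t 1 (Z.of_nat (S m))) (Gfac alpha t k x)))%C).
  { intros m. rewrite (Q_radius_shift R1 R2) by assumption. rewrite Q_double_int. fold c.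
    match goal with |- ?a = ?b => change (@eq C a b) end. ring. }
  rewrite (Q_radius_shift R1 R2), Q_double_int by assumption.
  apply (is_series_scal_l (K := C_AbsRing) (V := C_NormedModule)), is_series_of_psum.
  destruct (Gfac_series_uniform alpha t j (R1 + 2)) as [d [Hd Hb]]; [lra | lra |].
  apply (double_int_series_l (rho alpha) (R1 + 2) (R2 + 2)
           ltac:(lra) ltac:(lra) ltac:(lra) ltac:(lra)
           _ _ _ _ d); [intros m; apply holo_outside_Gfac | apply holo_outside_Gfac |
                        apply holo_outside_Gfac | exact Hb | exact Hd].
Qed.

Lemma is_series_Q_x alpha t R1 R2 i l y :
  rho alpha < R1 -> rho alpha < R2 -> R1 <> R2 ->
  is_series (V := C_R_NormedModule)
    (fun n => (RtoC (Theta (S i) (S n)) * Q R1 R2 alpha t 1 l (Z.of_nat (S n)) y)%C)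
    (Q R1 R2 alpha t (Z.of_nat (S i + 1)) l 1 y).
Proof.
  intros H1 H2 H12. pose proof (rho_ge_half alpha).
  set (c := RtoC (alpha ^ 2 / (2 * PI) ^ 2)).
  apply is_series_ext with
    (fun n => (c * (RtoC (Theta (S i) (S n))
                    * double_int (R1 + 2) (R2 + 2)
                        (Gfac alpha t l y) (Gfac alpha t 1 (Z.of_nat (S n)))))%C).
  { intros n. rewrite (Q_radius_shift R1 R2) by assumption. rewrite Q_double_int. fold c.
    match goal with |- ?a = ?b => change (@eq C a b) end. ring. }
  rewrite (Q_radius_shift R1 R2), Q_double_int by assumption.
  apply (is_series_scal_l (K := C_AbsRing) (V := C_NormedModule)), is_series_of_psum.
  destruct (Gfac_series_uniform alpha t i (R2 + 2)) as [d [Hd Hb]]; [lra | lra |].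
  apply (double_int_series_r (rho alpha) (R1 + 2) (R2 + 2)
           ltac:(lra) ltac:(lra) ltac:(lra) ltac:(lra)
           _ _ _ _ d); [intros n; apply holo_outside_Gfac | apply holo_outside_Gfac |
                        apply holo_outside_Gfac | exact Hb | exact Hd].
Qed.

Theorem lemmaB3 (alpha t R1 R2 : R) (N i j : nat) :
  0 <= alpha -> 0 <= t ->
  rho alpha < R1 -> rho alpha < R2 -> R1 <> R2 ->
  (1 <= N)%nat -> (1 <= i <= N)%nat -> (1 <= j <= N)%nat ->
  exists Ssum : nat -> C,
    (forall n : nat,
       is_series (V := C_R_NormedModule)
         (fun m : nat =>
            Cmult (Cmult (RtoC (Theta i (S n)))
                         (Q R1 R2 alpha t 1 1 (Z.of_nat (S n)) (Z.of_nat (S m))))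
                  (RtoC (Theta j (S m))))
         (Ssum n))
    /\ is_series (V := C_R_NormedModule) Ssum
         (Q R1 R2 alpha t (Z.of_nat (i + 1)) (Z.of_nat (j + 1)) 1 1).
Proof.
  intros _ _ H1 H2 H12 _ Hi Hj.
  destruct i as [|i]; [lia|]. destruct j as [|j]; [lia|].
  exists (fun n => (RtoC (Theta (S i) (S n))
                    * Q R1 R2 alpha t 1 (Z.of_nat (S j + 1)) (Z.of_nat (S n)) 1)%C).
  split.
  - intros n.
    apply is_series_ext with
      (fun m => (RtoC (Theta (S i) (S n))
                 * (RtoC (Theta (S j) (S m))
                    * Q R1 R2 alpha t 1 1 (Z.of_nat (S n)) (Z.of_nat (S m))))%C);
      [intros m; match goal with |- ?a = ?b => change (@eq C a b) end; ring|].
    apply (is_series_scal_l (K := C_AbsRing) (V := C_NormedModule)).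
    now apply is_series_Q_y.
  - now apply is_series_Q_x.
Qed.
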